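(* Let $h:S\to S$ be a homeomorphism of the Riemann sphere $S=\mathbb{C}\cup\{\infty\}$ with $h(\infty)=\infty$, and suppose there are nice lattices $\Gamma_1,\Gamma_2$ with $h\Gamma_1h^{-1}=\Gamma_2$ (for the boundary actions). If the restriction of $h$ to $\mathbb{C}\cong\mathbb{R}^2$ is a real affine transformation, then $h\in\mathcal{I}$, i.e. $h$ is a conformal transformation of $S$.
   Context: $\mathcal{I}$ denotes the isometry group of hyperbolic $3$-space $\mathbb{H}^3=\mathbb{C}\times(0,\infty)$; each isometry extends to a conformal transformation of $S$ (a homeomorphism of $S$ mapping generalized circles — round circles in $\mathbb{C}$ and sets $L\cup\{\infty\}$ with $L$ a line — to generalized circles), every conformal transformation arises this way, and we identify $\mathcal{I}$ with the group of conformal transformations of $S$. A nice lattice is a subgroup $\Gamma\subset\mathcal{I}$ acting freely, properly discontinuously and cocompactly on $\mathbb{H}^3$. A real affine transformation of $\mathbb{C}=\mathbb{R}^2$ is a map $v\mapsto T(v)+w$ with $T$ an invertible real-linear map and $w\in\mathbb{C}$. *)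

From Stdlib Require Import Reals List.
Open Scope R_scope.

(** The complex plane as R^2 and the Riemann sphere S = C ∪ {∞}
    (None = ∞). *)
Definition C2 : Type := (R * R)%type.
Definition S : Type := option C2.

Definition cnorm (p : C2) : R := sqrt (fst p ^ 2 + snd p ^ 2).
Definition cdist (p q : C2) : R := cnorm (fst p - fst q, snd p - snd q).

(** Sequential convergence in S (S is metrizable, so this determines
    its topology). *)
Definition conv_S (s : nat -> S) (z : S) : Prop :=
  match z with
  | Some c => forall eps, 0 < eps -> exists N, forall n, (N <= n)%nat ->
                 exists p, s n = Some p /\ cdist p c < eps
  | None => forall M, exists N, forall n, (N <= n)%nat ->
                 s n = None \/ exists p, s n = Some p /\ M < cnorm p
  end.

Definition continuous_S (h : S -> S) : Prop :=
  forall s z, conv_S s z -> conv_S (fun n => h (s n)) (h z).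

Definition homeomorphism_S (h : S -> S) : Prop :=
  exists hinv : S -> S,
    (forall z, hinv (h z) = z) /\ (forall z, h (hinv z) = z) /\
    continuous_S h /\ continuous_S hinv.

Definition gen_circle (A : S -> Prop) : Prop :=
  (exists (c : C2) (r : R), 0 < r /\
     forall z, A z <-> exists p, z = Some p /\ cdist p c = r)
  \/
  (exists a b g : R, (a <> 0 \/ b <> 0) /\
     forall z, A z <-> (z = None \/ exists p, z = Some p /\ a * fst p + b * snd p = g)).

Definition conformal (h : S -> S) : Prop :=
  homeomorphism_S h /\
  forall A, gen_circle A -> gen_circle (fun w => exists z, A z /\ h z = w).

Definition H3 : Type := {p : (R * R) * R | 0 < snd p}.

Definition hx (p : H3) : R := fst (fst (proj1_sig p)).
Definition hy (p : H3) : R := snd (fst (proj1_sig p)).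
Definition ht (p : H3) : R := snd (proj1_sig p).

(** cosh of the hyperbolic distance, and the distance (arcosh). *)
Definition hcosh (p q : H3) : R :=
  1 + ((hx p - hx q) ^ 2 + (hy p - hy q) ^ 2 + (ht p - ht q) ^ 2)
      / (2 * ht p * ht q).
Definition hdist (p q : H3) : R :=
  let u := hcosh p q in ln (u + sqrt (u ^ 2 - 1)).

Definition isometry (g : H3 -> H3) : Prop :=
  (forall p q, hdist (g p) (g q) = hdist p q) /\ (forall q, exists p, g p = q).

Definition hopen (U : H3 -> Prop) : Prop :=
  forall p, U p -> exists e, 0 < e /\ forall q, hdist p q < e -> U q.

Definition hcompact (K : H3 -> Prop) : Prop :=
  forall (I : Type) (U : I -> H3 -> Prop),
    (forall i, hopen (U i)) -> (forall p, K p -> exists i, U i p) ->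
    exists l : list I, forall p, K p -> exists i, In i l /\ U i p.

(** Nice lattice: a subgroup of Isom(H^3) acting freely, properly
    discontinuously and cocompactly. *)
Definition nice_lattice (G : (H3 -> H3) -> Prop) : Prop :=
  (forall g, G g -> isometry g) /\
  G (fun p => p) /\
  (forall g1 g2, G g1 -> G g2 -> G (fun p => g1 (g2 p))) /\
  (forall g, G g -> exists g', G g' /\ (forall p, g (g' p) = p) /\ (forall p, g' (g p) = p)) /\
  (forall g p, G g -> g p = p -> forall q, g q = q) /\
  (forall K, hcompact K -> exists l : list (H3 -> H3),
      forall g, G g -> (exists p, K p /\ K (g p)) ->
        exists g', In g' l /\ forall q, g q = g' q) /\
  (exists K, hcompact K /\ forall p, exists g q, G g /\ K q /\ g q = p).

(** Convergence of points of H^3 to a point of the boundary S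
    (topology of the closed half-space compactified at ∞). *)
Definition conv_bd (x : nat -> H3) (z : S) : Prop :=
  match z with
  | Some c => Un_cv (fun n => hx (x n)) (fst c) /\ Un_cv (fun n => hy (x n)) (snd c)
              /\ Un_cv (fun n => ht (x n)) 0
  | None => forall M, exists N, forall n, (N <= n)%nat ->
              M < cnorm (hx (x n), hy (x n)) + ht (x n)
  end.

Definition boundary_map (g : H3 -> H3) (f : S -> S) : Prop :=
  forall z x, conv_bd x z -> conv_bd (fun n => g (x n)) (f z).

Definition conj_lattices (h : S -> S) (G1 G2 : (H3 -> H3) -> Prop) : Prop :=
  (forall g1, G1 g1 -> exists g2 f1 f2, G2 g2 /\ boundary_map g1 f1 /\
       boundary_map g2 f2 /\ forall z, f2 (h z) = h (f1 z)) /\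
  (forall g2, G2 g2 -> exists g1 f1 f2, G1 g1 /\ boundary_map g1 f1 /\
       boundary_map g2 f2 /\ forall z, f2 (h z) = h (f1 z)).

Definition real_affine_on_C (h : S -> S) : Prop :=
  exists a b c d e f : R, a * d - b * c <> 0 /\
    forall x y, h (Some (x, y)) = Some (a * x + b * y + e, c * x + d * y + f).

(* Some element of Gamma1 moves oo.  Otherwise every element would fix oo, hence
   multiply heights by a constant and act on horizontal positions as a
   similarity; cocompactness provides an expanding element g, whose similarity
   has a fixed point c.  Not all of Gamma1 can fix the vertical line over c (again
   by cocompactness), and an element moving it yields a commutator with g that
   preserves heights but moves that line; its conjugates by powers of g then
   displace a point of the line by amounts tending to 0, against proper
   discontinuity.
   So the boundary map f1 of some element has a finite pole q.  Invariance of
   cross ratios under isometries makes f1 a similarity composed with the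
   inversion at q, and the conjugate h f1 h^-1, which is again the boundary map
   of an isometry, satisfies the same cross-ratio law around h(q).  Evaluating
   both at q + v and q - v gives |L M v|^2 |L v|^2 = k |v|^4 for the linear part
   L of h, which forces L to be conformal; an affine map with conformal linear
   part maps circles and lines to circles and lines. *)

From Stdlib Require Import Reals List Lra Lia Psatz FunctionalExtensionality Classical.
Open Scope R_scope.

(** * Hyperbolic space and its boundary *)

Lemma ht_pos (p : H3) : 0 < ht p.
Proof. exact (proj2_sig p). Qed.

Definition mkH (x y t : R) (Ht : 0 < t) : H3 := exist _ ((x, y), t) Ht.

Definition hform (p q : H3) : R :=
  (hx p - hx q) ^ 2 + (hy p - hy q) ^ 2 + ht p ^ 2 + ht q ^ 2.

Lemma hcosh_hform p q : 2 * hcosh p q * (ht p * ht q) = hform p q.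
Proof.
  pose proof (ht_pos p); pose proof (ht_pos q).
  unfold hcosh, hform. field. lra.
Qed.

Lemma hform_pos p q : 0 < hform p q.
Proof.
  unfold hform. pose proof (ht_pos p). pose proof (pow2_ge_0 (hx p - hx q)).
  pose proof (pow2_ge_0 (hy p - hy q)). pose proof (pow2_ge_0 (ht q)). nra.
Qed.

Lemma hcosh_ge1 p q : 1 <= hcosh p q.
Proof.
  pose proof (ht_pos p); pose proof (ht_pos q).
  assert (0 <= ((hx p - hx q) ^ 2 + (hy p - hy q) ^ 2 + (ht p - ht q) ^ 2)
               / (2 * ht p * ht q)).
  { unfold Rdiv; apply Rmult_le_pos; [|left; apply Rinv_0_lt_compat; nra].
    pose proof (pow2_ge_0 (hx p - hx q)); pose proof (pow2_ge_0 (hy p - hy q));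
    pose proof (pow2_ge_0 (ht p - ht q)); lra. }
  unfold hcosh. lra.
Qed.

Lemma arcosh_arg_pos u : 1 <= u -> 0 < u + sqrt (u ^ 2 - 1).
Proof. intros. pose proof (sqrt_pos (u ^ 2 - 1)). lra. Qed.

Lemma arcosh_inj u v : 1 <= u -> 1 <= v ->
  ln (u + sqrt (u ^ 2 - 1)) = ln (v + sqrt (v ^ 2 - 1)) -> u = v.
Proof.
  intros Hu Hv E. apply ln_inv in E; try apply arcosh_arg_pos; auto.
  destruct (Rtotal_order u v) as [Hl|[He|Hl]]; auto.
  - assert (sqrt (u ^ 2 - 1) <= sqrt (v ^ 2 - 1)) by (apply sqrt_le_1_alt; nra). lra.
  - assert (sqrt (v ^ 2 - 1) <= sqrt (u ^ 2 - 1)) by (apply sqrt_le_1_alt; nra). lra.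
Qed.

Lemma isometry_hcosh g p q : isometry g -> hcosh (g p) (g q) = hcosh p q.
Proof.
  intros [Hd _]. apply arcosh_inj; auto using hcosh_ge1. apply (Hd p q).
Qed.

Lemma isometry_hform g p q : isometry g ->
  hform (g p) (g q) * (ht p * ht q) = hform p q * (ht (g p) * ht (g q)).
Proof.
  intros Hg. rewrite <- !hcosh_hform, (isometry_hcosh g p q Hg). ring.
Qed.

Lemma hcosh_le_exp_hdist p q : hcosh p q <= exp (hdist p q).
Proof.
  unfold hdist. rewrite exp_ln by auto using arcosh_arg_pos, hcosh_ge1.
  pose proof (sqrt_pos (hcosh p q ^ 2 - 1)). lra.
Qed.

Lemma hdist_lt_of_hcosh e : 0 < e ->
  exists eta, 0 < eta /\ forall p q, hcosh p q < 1 + eta -> hdist p q < e.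
Proof.
  intros He. set (e' := Rmin e 1).
  assert (He' : 0 < e') by (apply Rmin_glb_lt; lra).
  assert (He1 : e' <= 1) by apply Rmin_r. assert (He2 : e' <= e) by apply Rmin_l.
  exists (e' ^ 2 / 16). split; [nra|].
  intros p q Hpq. pose proof (hcosh_ge1 p q) as H1. set (u := hcosh p q) in *.
  assert (Hs : sqrt (u ^ 2 - 1) <= e' / 2).
  { rewrite <- (sqrt_pow2 (e' / 2)) by lra. apply sqrt_le_1_alt.
    assert ((u - 1) * (u + 1) <= e' ^ 2 / 16 * 3) by (apply Rmult_le_compat; nra).
    nra. }
  unfold hdist. fold u.
  apply Rlt_le_trans with e'; auto.
  apply Rlt_trans with (ln (1 + e')).
  - apply ln_increasing; pose proof (sqrt_pos (u ^ 2 - 1)); nra.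
  - pose proof (exp_ineq1 e' ltac:(lra)). rewrite <- (ln_exp e') at 2.
    apply ln_increasing; lra.
Qed.

Lemma Rabs_lt_of_sqr x e : 0 < e -> x ^ 2 < e ^ 2 -> Rabs x < e.
Proof.
  intros He H. rewrite <- (pow2_abs x) in H. pose proof (Rabs_pos x). nra.
Qed.

Lemma hdist_small_coords p eps : 0 < eps -> exists e, 0 < e /\ forall q, hdist p q < e ->
  Rabs (ht q - ht p) < eps /\ Rabs (hx q - hx p) < eps /\ Rabs (hy q - hy p) < eps.
Proof.
  intros Heps. set (sp := ht p). assert (Hsp : 0 < sp) by apply ht_pos.
  set (dl := Rmin (1 / 4) (eps ^ 2 / (4 * sp ^ 2))).
  assert (Hdl : 0 < dl) by (apply Rmin_glb_lt; [lra|apply Rdiv_lt_0_compat; nra]).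
  assert (Hdl1 : dl <= 1 / 4) by apply Rmin_l.
  assert (Hdl3 : 4 * sp ^ 2 * dl <= eps ^ 2).
  { pose proof (Rmin_r (1 / 4) (eps ^ 2 / (4 * sp ^ 2))) as Hdl2. fold dl in Hdl2.
    apply (Rmult_le_compat_l (4 * sp ^ 2)) in Hdl2; [|nra].
    replace (4 * sp ^ 2 * (eps ^ 2 / (4 * sp ^ 2))) with (eps ^ 2) in Hdl2 by (field; lra).
    lra. }
  exists (ln (1 + dl)). split; [rewrite <- ln_1; apply ln_increasing; lra|].
  intros q Hq. set (sq := ht q). assert (Hsq : 0 < sq) by apply ht_pos.
  assert (Hc : hcosh p q < 1 + dl).
  { eapply Rle_lt_trans; [apply hcosh_le_exp_hdist|].
    rewrite <- (exp_ln (1 + dl)) by lra. apply exp_increasing; auto. }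
  unfold hcosh in Hc. fold sp sq in Hc.
  set (Dx := hx p - hx q) in *. set (Dy := hy p - hy q) in *.
  assert (HD : Dx ^ 2 + Dy ^ 2 + (sp - sq) ^ 2 < 2 * dl * sp * sq).
  { assert (H1 : (Dx ^ 2 + Dy ^ 2 + (sp - sq) ^ 2) / (2 * sp * sq) < dl) by lra.
    apply (Rmult_lt_compat_r (2 * sp * sq)) in H1; [|nra].
    unfold Rdiv in H1. rewrite Rmult_assoc, Rinv_l in H1 by nra. lra. }
  pose proof (pow2_ge_0 Dx); pose proof (pow2_ge_0 Dy); pose proof (pow2_ge_0 (sp - sq)).
  assert (Hle : sq <= 2 * sp).
  { destruct (Rle_lt_dec sq (2 * sp)) as [|Hlt]; auto.
    assert (2 * dl * sp * sq <= sp * sq / 2) by nra.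
    assert (sq ^ 2 / 4 < (sp - sq) ^ 2) by nra.
    nra. }
  assert (HD2 : Dx ^ 2 + Dy ^ 2 + (sp - sq) ^ 2 < eps ^ 2) by nra.
  repeat split; apply Rabs_lt_of_sqr; auto.
  - replace ((ht q - ht p) ^ 2) with ((sp - sq) ^ 2) by (unfold sp, sq; ring). lra.
  - replace ((hx q - hx p) ^ 2) with (Dx ^ 2) by (unfold Dx; ring). lra.
  - replace ((hy q - hy p) ^ 2) with (Dy ^ 2) by (unfold Dy; ring). lra.
Qed.

Lemma nat_unbounded M : exists N : nat, M < INR N.
Proof.
  destruct (INR_archimed 1 M) as [N HN]; [lra|]. exists N. lra.
Qed.

Lemma Un_cv_const c : Un_cv (fun _ => c) c.
Proof.
  intros e He. exists 0%nat. intros. unfold Rdist, R_dist.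
  rewrite Rminus_diag, Rabs_R0. lra.
Qed.

Lemma Un_cv_inv_INR_S : Un_cv (fun n => / INR (Datatypes.S n)) 0.
Proof.
  intros e He. destruct (nat_unbounded (/ e)) as [N HN]. exists N. intros n Hn.
  unfold Rdist, R_dist. rewrite Rminus_0_r.
  assert (INR N <= INR (Datatypes.S n)) by (apply le_INR; lia).
  assert (0 < INR (Datatypes.S n)) by (apply lt_0_INR; lia).
  rewrite Rabs_pos_eq by (left; apply Rinv_0_lt_compat; lra).
  assert (0 < / e) by (apply Rinv_0_lt_compat; lra).
  rewrite <- (Rinv_inv e). apply Rinv_lt_contravar; nra.
Qed.

Lemma Un_cv_sqr (u : nat -> R) l : Un_cv u l -> Un_cv (fun n => u n ^ 2) (l ^ 2).
Proof.
  intros H. replace (l ^ 2) with (l * l) by ring.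
  apply Un_cv_ext with (fun n => u n * u n); [intros; ring|]. apply CV_mult; auto.
Qed.

Lemma Un_cv_ev_bound (u : nat -> R) l :
  Un_cv u l -> exists N, forall n, (N <= n)%nat -> Rabs (u n) <= Rabs l + 1.
Proof.
  intros H. destruct (H 1) as [N HN]; [lra|]. exists N. intros n Hn.
  specialize (HN n Hn). unfold Rdist, R_dist in HN.
  replace (u n) with ((u n - l) + l) by ring. eapply Rle_trans; [apply Rabs_triang|lra].
Qed.

Lemma cnorm_le x y : cnorm (x, y) <= Rabs x + Rabs y.
Proof.
  unfold cnorm; simpl.
  pose proof (Rabs_pos x); pose proof (Rabs_pos y).
  rewrite <- (sqrt_pow2 (Rabs x + Rabs y)) by lra.
  apply sqrt_le_1_alt. pose proof (pow2_abs x) as Ex; pose proof (pow2_abs y) as Ey.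
  simpl in Ex, Ey. nra.
Qed.

Definition vertical_seq (c : C2) : nat -> H3 :=
  fun n => mkH (fst c) (snd c) (/ INR (Datatypes.S n))
             (Rinv_0_lt_compat _ (lt_0_INR _ (Nat.lt_0_succ n))).

Definition vertical_seq_inf : nat -> H3 :=
  fun n => mkH 0 0 (INR (Datatypes.S n)) (lt_0_INR _ (Nat.lt_0_succ n)).

Lemma conv_bd_vertical c : conv_bd (vertical_seq c) (Some c).
Proof.
  destruct c as [a b]. hnf. unfold vertical_seq, mkH, hx, hy, ht; cbn [proj1_sig fst snd].
  split; [|split]; [apply Un_cv_const|apply Un_cv_const|apply Un_cv_inv_INR_S].
Qed.

Lemma conv_bd_vertical_inf : conv_bd vertical_seq_inf None.
Proof.
  intros M. destruct (nat_unbounded M) as [N HN]. exists N. intros n Hn.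
  unfold vertical_seq_inf, hx, hy, ht, mkH; cbn [proj1_sig fst snd].
  assert (INR N <= INR (Datatypes.S n)) by (apply le_INR; lia).
  pose proof (sqrt_pos (0 ^ 2 + 0 ^ 2)). unfold cnorm; cbn [fst snd]. lra.
Qed.

Lemma conv_bd_exists z : exists x, conv_bd x z.
Proof.
  destruct z as [c|].
  - exists (vertical_seq c); apply conv_bd_vertical.
  - exists vertical_seq_inf; apply conv_bd_vertical_inf.
Qed.

Lemma conv_bd_some_bounded x c : conv_bd x (Some c) ->
  exists N, forall n, (N <= n)%nat ->
    cnorm (hx (x n), hy (x n)) + ht (x n) <= Rabs (fst c) + Rabs (snd c) + 3.
Proof.
  intros [H1 [H2 H3]].
  destruct (Un_cv_ev_bound _ _ H1) as [N1 HN1].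
  destruct (Un_cv_ev_bound _ _ H2) as [N2 HN2].
  destruct (Un_cv_ev_bound _ _ H3) as [N3 HN3].
  exists (N1 + N2 + N3)%nat. intros n Hn.
  specialize (HN1 n ltac:(lia)); specialize (HN2 n ltac:(lia)); specialize (HN3 n ltac:(lia)).
  pose proof (cnorm_le (hx (x n)) (hy (x n))). pose proof (Rle_abs (ht (x n))).
  rewrite Rabs_R0 in HN3. lra.
Qed.

Lemma conv_bd_unique x z1 z2 : conv_bd x z1 -> conv_bd x z2 -> z1 = z2.
Proof.
  assert (Hfin : forall c, ~ (conv_bd x (Some c) /\ conv_bd x None)).
  { intros c [Hc Hinf]. destruct (conv_bd_some_bounded _ _ Hc) as [N HN].
    destruct (Hinf (Rabs (fst c) + Rabs (snd c) + 3)) as [N' HN'].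
    specialize (HN (N + N')%nat ltac:(lia)). specialize (HN' (N + N')%nat ltac:(lia)). lra. }
  intros H1 H2. destruct z1 as [[a1 b1]|], z2 as [[a2 b2]|].
  - destruct H1 as [Ha1 [Hb1 _]], H2 as [Ha2 [Hb2 _]].
    simpl in *. f_equal. f_equal; eapply UL_sequence; eauto.
  - exact (False_ind _ (Hfin _ (conj H1 H2))).
  - exact (False_ind _ (Hfin _ (conj H2 H1))).
  - reflexivity.
Qed.

Lemma boundary_map_unique g f f' :
  boundary_map g f -> boundary_map g f' -> forall z, f z = f' z.
Proof.
  intros H H' z. destruct (conv_bd_exists z) as [x Hx].
  eapply conv_bd_unique; [apply (H _ _ Hx)|apply (H' _ _ Hx)].
Qed.

Lemma boundary_map_inv g g' f f' : boundary_map g f -> boundary_map g' f' ->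
  (forall p, g (g' p) = p) -> forall z, f (f' z) = z.
Proof.
  intros Hf Hf' Hgg z. destruct (conv_bd_exists z) as [x Hx].
  pose proof (Hf _ _ (Hf' _ _ Hx)) as H. simpl in H.
  replace (fun n => g (g' (x n))) with x in H
    by (apply functional_extensionality; intros; rewrite Hgg; auto).
  eapply conv_bd_unique; eauto.
Qed.

Definition in_box (B : R) (p : H3) : Prop :=
  Rabs (hx p) <= B /\ Rabs (hy p) <= B /\ Rabs (ht p) <= B.

Definition ev_bounded (P : nat -> H3) : Prop :=
  exists B N, 1 <= B /\ forall n, (N <= n)%nat -> in_box B (P n).

Lemma in_box_mono B B' p : B <= B' -> in_box B p -> in_box B' p.
Proof. intros HB (H1 & H2 & H3). repeat split; lra. Qed.

Lemma ev_bounded_of_cv P a b c : Un_cv (fun n => hx (P n)) a ->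
  Un_cv (fun n => hy (P n)) b -> Un_cv (fun n => ht (P n)) c -> ev_bounded P.
Proof.
  intros H1 H2 H3. destruct (Un_cv_ev_bound _ _ H1) as [N1 HN1].
  destruct (Un_cv_ev_bound _ _ H2) as [N2 HN2].
  destruct (Un_cv_ev_bound _ _ H3) as [N3 HN3].
  exists (Rabs a + Rabs b + Rabs c + 1), (N1 + N2 + N3)%nat.
  pose proof (Rabs_pos a); pose proof (Rabs_pos b); pose proof (Rabs_pos c).
  split; [lra|]. intros n Hn.
  specialize (HN1 n ltac:(lia)); specialize (HN2 n ltac:(lia)); specialize (HN3 n ltac:(lia)).
  repeat split; lra.
Qed.

Lemma ev_bounded_conv_bd P c : conv_bd P (Some c) -> ev_bounded P.
Proof. intros (H1 & H2 & H3). eapply ev_bounded_of_cv; eauto. Qed.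

Lemma ev_bounded_const x : ev_bounded (fun _ => x).
Proof. eapply ev_bounded_of_cv; apply Un_cv_const. Qed.

Lemma Rabs_le_inv x B : Rabs x <= B -> - B <= x <= B.
Proof. intros H. pose proof (Rle_abs x). pose proof (Rle_abs (- x)). rewrite Rabs_Ropp in *. lra. Qed.

Lemma hform_sub_bound B P Q X : in_box B P -> in_box B Q ->
  Rabs (hform P X - hform Q X) <= 3 * B ^ 2 + 4 * B * (Rabs (hx X) + Rabs (hy X)).
Proof.
  intros (H1 & H2 & H3) (H4 & H5 & H6).
  assert (Hsq : forall z, Rabs z <= B -> 0 <= z ^ 2 <= B ^ 2).
  { intros z Hz. rewrite <- (pow2_abs z). pose proof (Rabs_pos z). split; nra. }
  assert (Hcross : forall u v w, Rabs v <= B -> Rabs w <= B ->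
            - (2 * B * Rabs u) <= u * (v - w) <= 2 * B * Rabs u).
  { intros u v w Hv Hw. apply Rabs_le_inv. rewrite Rabs_mult.
    pose proof (Rabs_triang v (- w)). rewrite Rabs_Ropp in *.
    pose proof (Rabs_pos u). unfold Rminus. nra. }
  pose proof (Hsq _ H1); pose proof (Hsq _ H2); pose proof (Hsq _ H3);
  pose proof (Hsq _ H4); pose proof (Hsq _ H5); pose proof (Hsq _ H6).
  pose proof (Hcross (hx X) _ _ H1 H4); pose proof (Hcross (hy X) _ _ H2 H5).
  apply Rabs_le. unfold hform.
  replace ((hx P - hx X) ^ 2 + (hy P - hy X) ^ 2 + ht P ^ 2 + ht X ^ 2
           - ((hx Q - hx X) ^ 2 + (hy Q - hy X) ^ 2 + ht Q ^ 2 + ht X ^ 2))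
    with (hx P ^ 2 + hy P ^ 2 + ht P ^ 2 - hx Q ^ 2 - hy Q ^ 2 - ht Q ^ 2
          - 2 * (hx X * (hx P - hx Q)) - 2 * (hy X * (hy P - hy Q))) by ring.
  lra.
Qed.

Lemma hform_lower_bound B Q X : in_box B Q ->
  (Rabs (hx X) + Rabs (hy X) + ht X) ^ 2 / 6 - 2 * B ^ 2 <= hform Q X.
Proof.
  intros (H1 & H2 & H3). pose proof (ht_pos X).
  assert (Hsq : forall z, Rabs z <= B -> z ^ 2 <= B ^ 2).
  { intros z Hz. rewrite <- (pow2_abs z). pose proof (Rabs_pos z). nra. }
  assert (Hx : hx X ^ 2 / 2 - B ^ 2 <= (hx Q - hx X) ^ 2).
  { pose proof (Hsq _ H1). pose proof (pow2_ge_0 (hx Q - hx X / 2)). nra. }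
  assert (Hy : hy X ^ 2 / 2 - B ^ 2 <= (hy Q - hy X) ^ 2).
  { pose proof (Hsq _ H2). pose proof (pow2_ge_0 (hy Q - hy X / 2)). nra. }
  assert (HT : (Rabs (hx X) + Rabs (hy X) + ht X) ^ 2
               <= 3 * (hx X ^ 2 + hy X ^ 2 + ht X ^ 2)).
  { rewrite <- (pow2_abs (hx X)), <- (pow2_abs (hy X)).
    set (a := Rabs (hx X)). set (b := Rabs (hy X)). set (c := ht X).
    assert (3 * (a ^ 2 + b ^ 2 + c ^ 2) - (a + b + c) ^ 2
            = (a - b) ^ 2 + (a - c) ^ 2 + (b - c) ^ 2) by ring.
    pose proof (pow2_ge_0 (a - b)); pose proof (pow2_ge_0 (a - c));
    pose proof (pow2_ge_0 (b - c)). lra. }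
  unfold hform. pose proof (pow2_ge_0 (ht Q)). pose proof (pow2_ge_0 (ht X)). lra.
Qed.

Lemma ratio_threshold B e T : 0 < e <= 1 -> 1 <= B -> 48 * B / e + 6 < T ->
  3 * B ^ 2 + 4 * B * T < e * (T ^ 2 / 6 - 2 * B ^ 2).
Proof.
  intros He HB HT.
  assert (HT2 : 48 * B + 6 * e < e * T).
  { apply (Rmult_lt_compat_l e) in HT; [|lra].
    replace (e * (48 * B / e + 6)) with (48 * B + 6 * e) in HT by (field; lra). lra. }
  assert (48 * B < T) by nra.
  assert (T * (48 * B + 6 * e) < T * (e * T)) by (apply Rmult_lt_compat_l; nra).
  nra.
Qed.

Lemma hform_ratio_cv P Q X : ev_bounded P -> ev_bounded Q -> conv_bd X None ->
  Un_cv (fun n => hform (P n) (X n) / hform (Q n) (X n)) 1.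
Proof.
  intros (B1 & N1 & HB1 & HP) (B2 & N2 & HB2 & HQ) HX e He.
  set (e' := Rmin e 1).
  assert (He' : 0 < e' <= 1) by (split; [apply Rmin_glb_lt; lra|apply Rmin_r]).
  assert (e' <= e) by apply Rmin_l.
  set (B := Rmax B1 B2).
  assert (B1 <= B) by apply Rmax_l. assert (B2 <= B) by apply Rmax_r.
  destruct (HX (48 * B / e' + 6)) as [N3 HN3].
  exists (N1 + N2 + N3)%nat. intros n Hn.
  pose proof (in_box_mono B1 B _ ltac:(lra) (HP n ltac:(lia))) as HPn.
  pose proof (in_box_mono B2 B _ ltac:(lra) (HQ n ltac:(lia))) as HQn.
  specialize (HN3 n ltac:(lia)).
  pose proof (cnorm_le (hx (X n)) (hy (X n))).
  set (T := Rabs (hx (X n)) + Rabs (hy (X n)) + ht (X n)).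
  pose proof (ht_pos (X n)).
  pose proof (hform_sub_bound B _ _ (X n) HPn HQn) as Hdiff.
  pose proof (hform_lower_bound B _ (X n) HQn) as Hlow. fold T in Hlow.
  pose proof (ratio_threshold B e' T He' ltac:(lra) ltac:(unfold T; lra)) as Harith.
  pose proof (hform_pos (Q n) (X n)) as HF.
  unfold Rdist, R_dist.
  replace (hform (P n) (X n) / hform (Q n) (X n) - 1)
    with ((hform (P n) (X n) - hform (Q n) (X n)) / hform (Q n) (X n)) by (field; lra).
  unfold Rdiv. rewrite Rabs_mult, (Rabs_pos_eq (/ _)) by (left; apply Rinv_0_lt_compat; lra).
  apply (Rmult_lt_reg_r (hform (Q n) (X n))); auto.
  rewrite Rmult_assoc, Rinv_l by lra.
  assert (Rabs (hx (X n)) + Rabs (hy (X n)) <= T) by (unfold T; lra).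
  nra.
Qed.

Definition sqdist (p q : C2) : R := (fst p - fst q) ^ 2 + (snd p - snd q) ^ 2.

Lemma hform_cv P Q w w' : conv_bd P (Some w) -> conv_bd Q (Some w') ->
  Un_cv (fun n => hform (P n) (Q n)) (sqdist w w').
Proof.
  destruct w as [a b], w' as [c d].
  intros (H1 & H2 & H3) (H4 & H5 & H6). cbn [fst snd] in *. unfold sqdist, hform; cbn [fst snd].
  replace ((a - c) ^ 2 + (b - d) ^ 2) with ((a - c) ^ 2 + (b - d) ^ 2 + 0 ^ 2 + 0 ^ 2) by ring.
  apply CV_plus; [apply CV_plus; [apply CV_plus|]|]; apply Un_cv_sqr; try apply CV_minus; auto.
Qed.

Lemma isometry_hform_cross g x1 x2 x3 x4 : isometry g ->
  hform (g x1) (g x3) * hform (g x2) (g x4) * hform x1 x4 * hform x2 x3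
  = hform x1 x3 * hform x2 x4 * hform (g x1) (g x4) * hform (g x2) (g x3).
Proof.
  intros Hg.
  pose proof (isometry_hform g x1 x3 Hg) as E13; pose proof (isometry_hform g x2 x4 Hg) as E24;
  pose proof (isometry_hform g x1 x4 Hg) as E14; pose proof (isometry_hform g x2 x3 Hg) as E23.
  assert (P : 0 < ht x1 * ht x2 * ht x3 * ht x4)
    by (pose proof (ht_pos x1); pose proof (ht_pos x2); pose proof (ht_pos x3);
        pose proof (ht_pos x4); repeat apply Rmult_lt_0_compat; auto).
  apply (Rmult_eq_reg_r (ht x1 * ht x2 * ht x3 * ht x4)); [|lra].
  transitivity ((hform (g x1) (g x3) * (ht x1 * ht x3)) * (hform (g x2) (g x4) * (ht x2 * ht x4))
                * hform x1 x4 * hform x2 x3); [ring|].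
  transitivity (hform x1 x3 * hform x2 x4
                * ((hform (g x1) (g x4) * (ht x1 * ht x4)) * (hform (g x2) (g x3) * (ht x2 * ht x3))));
    [|ring].
  rewrite E13, E24, E14, E23. ring.
Qed.

(* The cross ratio of boundary points is read off from [hform] along vertical
   sequences; when [f] sends [q] to [oo], one factor of it disappears. *)
Lemma boundary_cross_ratio_inf g f z1 z2 z3 q w1 w2 w3 : isometry g -> boundary_map g f ->
  f (Some z1) = Some w1 -> f (Some z2) = Some w2 -> f (Some z3) = Some w3 ->
  f (Some q) = None ->
  sqdist w1 w3 * sqdist z1 q * sqdist z2 z3 = sqdist z1 z3 * sqdist z2 q * sqdist w2 w3.
Proof.
  intros Hg Hf E1 E2 E3 E4.
  set (x1 := vertical_seq z1); set (x2 := vertical_seq z2);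
  set (x3 := vertical_seq z3); set (x4 := vertical_seq q).
  pose proof (conv_bd_vertical z1) as X1; pose proof (conv_bd_vertical z2) as X2;
  pose proof (conv_bd_vertical z3) as X3; pose proof (conv_bd_vertical q) as X4.
  pose proof (Hf _ _ X1) as Y1; pose proof (Hf _ _ X2) as Y2;
  pose proof (Hf _ _ X3) as Y3; pose proof (Hf _ _ X4) as Y4.
  rewrite E1 in Y1; rewrite E2 in Y2; rewrite E3 in Y3; rewrite E4 in Y4.
  set (L := fun n => hform (g (x1 n)) (g (x3 n))
                     * (hform (g (x2 n)) (g (x4 n)) / hform (g (x1 n)) (g (x4 n)))
                     * hform (x1 n) (x4 n) * hform (x2 n) (x3 n)).
  set (Rr := fun n => hform (x1 n) (x3 n) * hform (x2 n) (x4 n) * hform (g (x2 n)) (g (x3 n))).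
  assert (EQ : forall n, L n = Rr n).
  { intros n. unfold L, Rr.
    pose proof (isometry_hform_cross g (x1 n) (x2 n) (x3 n) (x4 n) Hg) as H.
    pose proof (hform_pos (g (x1 n)) (g (x4 n))).
    apply (Rmult_eq_reg_r (hform (g (x1 n)) (g (x4 n)))); [|lra].
    field_simplify; [|lra]. rewrite H. ring. }
  assert (CL : Un_cv Rr (sqdist w1 w3 * 1 * sqdist z1 q * sqdist z2 z3)).
  { apply Un_cv_ext with L; [exact EQ|].
    apply CV_mult; [apply CV_mult; [apply CV_mult|]|]; try (apply hform_cv; auto).
    apply hform_ratio_cv; auto; eapply ev_bounded_conv_bd; eauto. }
  assert (CR : Un_cv Rr (sqdist z1 z3 * sqdist z2 q * sqdist w2 w3)).
  { apply CV_mult; [apply CV_mult|]; apply hform_cv; auto. }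
  pose proof (UL_sequence _ _ _ CL CR). lra.
Qed.

Lemma boundary_fix_inf_height_ratio g f : isometry g -> boundary_map g f -> f None = None ->
  forall x1 x2, ht (g x1) * ht x2 = ht (g x2) * ht x1.
Proof.
  intros Hg Hf E x1 x2.
  set (y := vertical_seq_inf).
  pose proof (Hf _ _ conv_bd_vertical_inf) as Y. rewrite E in Y.
  set (L := fun n => hform (g x1) (g (y n)) / hform (g x2) (g (y n)) * (ht x1 * ht (g x2))).
  set (Rr := fun n => hform x1 (y n) / hform x2 (y n) * (ht (g x1) * ht x2)).
  assert (EQ : forall n, L n = Rr n).
  { intros n. unfold L, Rr.
    pose proof (isometry_hform g x1 (y n) Hg) as E1. pose proof (isometry_hform g x2 (y n) Hg) as E2.
    pose proof (hform_pos (g x2) (g (y n))). pose proof (hform_pos x2 (y n)).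
    pose proof (ht_pos x1). pose proof (ht_pos x2). pose proof (ht_pos (y n)).
    pose proof (ht_pos (g x1)). pose proof (ht_pos (g x2)). pose proof (ht_pos (g (y n))).
    assert (A1 : hform (g x1) (g (y n))
                 = hform x1 (y n) * (ht (g x1) * ht (g (y n))) / (ht x1 * ht (y n))).
    { apply (Rmult_eq_reg_r (ht x1 * ht (y n))); [|nra]. rewrite E1. field. lra. }
    assert (A2 : hform (g x2) (g (y n))
                 = hform x2 (y n) * (ht (g x2) * ht (g (y n))) / (ht x2 * ht (y n))).
    { apply (Rmult_eq_reg_r (ht x2 * ht (y n))); [|nra]. rewrite E2. field. lra. }
    rewrite A1, A2. field. repeat split; lra. }
  assert (CL : Un_cv Rr (1 * (ht x1 * ht (g x2)))).
  { apply Un_cv_ext with L; [exact EQ|].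
    apply CV_mult; [apply hform_ratio_cv; auto using ev_bounded_const|apply Un_cv_const]. }
  assert (CR : Un_cv Rr (1 * (ht (g x1) * ht x2))).
  { apply CV_mult; [apply hform_ratio_cv; auto using ev_bounded_const, conv_bd_vertical_inf
                   |apply Un_cv_const]. }
  pose proof (UL_sequence _ _ _ CL CR). lra.
Qed.

(** * Similarities and inversions of the plane *)

Lemma sqdist_ge0 p q : 0 <= sqdist p q.
Proof.
  unfold sqdist. pose proof (pow2_ge_0 (fst p - fst q)). pose proof (pow2_ge_0 (snd p - snd q)). lra.
Qed.

Lemma sqdist_sym p q : sqdist p q = sqdist q p.
Proof. unfold sqdist. ring. Qed.

Lemma sqdist_refl p : sqdist p p = 0.
Proof. unfold sqdist. ring. Qed.

Lemma sqdist_eq0 p q : sqdist p q = 0 -> p = q.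
Proof.
  destruct p as [a b], q as [c d]. unfold sqdist; simpl. intros H.
  destruct (Rplus_sqr_eq_0 (a - c) (b - d)) as [E1 E2]; [unfold Rsqr; lra|].
  f_equal; lra.
Qed.

Lemma sqdist_pos p q : p <> q -> 0 < sqdist p q.
Proof.
  intros H. destruct (sqdist_ge0 p q) as [H'|H']; auto.
  symmetry in H'. apply sqdist_eq0 in H'. tauto.
Qed.

Lemma neq_fst (p q : C2) : fst p <> fst q -> p <> q.
Proof. intros H E. subst. auto. Qed.

Section CrossRatioInf.

Variables (F : C2 -> C2) (q : C2).
Hypothesis F_cross_ratio : forall z1 z2 z3, z1 <> q -> z2 <> q -> z3 <> q ->
  sqdist (F z1) (F z3) * sqdist z1 q * sqdist z2 z3
  = sqdist z1 z3 * sqdist z2 q * sqdist (F z2) (F z3).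
Hypothesis F_inj : forall z u, z <> q -> u <> q -> F z = F u -> z = u.

Let kf z w := sqdist (F z) (F w) * sqdist z q * sqdist w q / sqdist z w.

Let kf_sym z w : kf z w = kf w z.
Proof. unfold kf. rewrite (sqdist_sym (F z) (F w)), (sqdist_sym z w). unfold Rdiv. ring. Qed.

Let kf_step a b c : a <> q -> b <> q -> c <> q -> a <> c -> b <> c -> kf a c = kf b c.
Proof.
  intros Ha Hb Hc Hac Hbc. pose proof (F_cross_ratio a b c Ha Hb Hc) as H.
  pose proof (sqdist_pos _ _ Hac). pose proof (sqdist_pos _ _ Hbc).
  unfold kf. apply (Rmult_eq_reg_r (sqdist a c * sqdist b c)); [|nra].
  transitivity (sqdist (F a) (F c) * sqdist a q * sqdist b c * sqdist c q); [field; lra|].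
  rewrite H. field. lra.
Qed.

Lemma cross_ratio_inf_const : exists k, 0 < k /\ forall z u, z <> q -> u <> q ->
  sqdist (F z) (F u) * (sqdist z q * sqdist u q) = k * sqdist z u.
Proof.
  set (r1 := (fst q + 1, snd q)). set (r2 := (fst q + 2, snd q)).
  assert (H1 : r1 <> q) by (apply neq_fst; simpl; lra).
  assert (H2 : r2 <> q) by (apply neq_fst; simpl; lra).
  assert (H12 : r1 <> r2) by (apply neq_fst; simpl; lra).
  exists (kf r1 r2). split.
  - assert (F r1 <> F r2) by (intro E; apply H12; apply F_inj; auto).
    pose proof (sqdist_pos _ _ H). pose proof (sqdist_pos _ _ H1).
    pose proof (sqdist_pos _ _ H2). pose proof (sqdist_pos _ _ H12).
    apply Rdiv_lt_0_compat; auto. repeat apply Rmult_lt_0_compat; auto.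
  - intros z u Hz Hu. destruct (classic (z = u)) as [->|Hzu].
    { rewrite !sqdist_refl. ring. }
    (* a point far to the right avoids every point met along the chain *)
    set (v := (Rabs (fst u) + Rabs (fst q) + 3, snd q)).
    pose proof (Rle_abs (fst u)). pose proof (Rle_abs (fst q)).
    pose proof (Rabs_pos (fst u)). pose proof (Rabs_pos (fst q)).
    assert (Hv : v <> q) by (apply neq_fst; simpl; lra).
    assert (Hvu : v <> u) by (apply neq_fst; simpl; lra).
    assert (Hv1 : v <> r1) by (apply neq_fst; simpl; lra).
    assert (E : kf z u = kf r1 r2).
    { rewrite (kf_step z v u), kf_sym, (kf_step u r1 v), kf_sym, (kf_step v r2 r1);
        auto using kf_sym; congruence. }
    rewrite <- E. unfold kf. pose proof (sqdist_pos _ _ Hzu). field. lra.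
Qed.

End CrossRatioInf.

Definition inv_at (q a : C2) : C2 :=
  (fst q + (fst a - fst q) / sqdist a q, snd q + (snd a - snd q) / sqdist a q).

Lemma sqdist_inv_at_center q a : a <> q -> sqdist (inv_at q a) q = / sqdist a q.
Proof.
  intros H. pose proof (sqdist_pos _ _ H) as P. destruct a as [a1 a2], q as [q1 q2].
  unfold inv_at, sqdist in *; simpl in *. field. lra.
Qed.

Lemma inv_at_neq q a : a <> q -> inv_at q a <> q.
Proof.
  intros H E. pose proof (sqdist_inv_at_center q a H) as Hd. rewrite E, sqdist_refl in Hd.
  pose proof (sqdist_pos _ _ H). assert (0 < / sqdist a q) by (apply Rinv_0_lt_compat; lra). lra.
Qed.

Lemma sqdist_inv_at q a b : a <> q -> b <> q ->
  sqdist (inv_at q a) (inv_at q b) = sqdist a b / (sqdist a q * sqdist b q).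
Proof.
  intros Ha Hb. pose proof (sqdist_pos _ _ Ha). pose proof (sqdist_pos _ _ Hb).
  destruct a as [a1 a2], b as [b1 b2], q as [q1 q2].
  unfold inv_at, sqdist in *; simpl in *. field. lra.
Qed.

Lemma inv_at_invol q a : a <> q -> inv_at q (inv_at q a) = a.
Proof.
  intros H. pose proof (sqdist_inv_at_center q a H) as E. pose proof (sqdist_pos _ _ H).
  unfold inv_at at 1. rewrite E. destruct a as [a1 a2], q as [q1 q2].
  unfold inv_at, sqdist in *; simpl in *. f_equal; field; lra.
Qed.

Lemma cross_ratio_inf_similarity (F : C2 -> C2) q k :
  (forall z u, z <> q -> u <> q -> sqdist (F z) (F u) * (sqdist z q * sqdist u q) = k * sqdist z u) ->
  forall x y, x <> q -> y <> q -> sqdist (F (inv_at q x)) (F (inv_at q y)) = k * sqdist x y.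
Proof.
  intros HK x y Hx Hy. pose proof (HK _ _ (inv_at_neq q x Hx) (inv_at_neq q y Hy)) as E.
  rewrite !sqdist_inv_at_center, sqdist_inv_at in E by auto.
  pose proof (sqdist_pos _ _ Hx). pose proof (sqdist_pos _ _ Hy).
  apply (Rmult_eq_reg_r (/ sqdist x q * / sqdist y q));
    [|apply Rgt_not_eq, Rmult_lt_0_compat; apply Rinv_0_lt_compat; lra].
  rewrite E. field. lra.
Qed.

Definition mx_apply (m11 m12 m21 m22 : R) (p : C2) : C2 :=
  (m11 * fst p + m12 * snd p, m21 * fst p + m22 * snd p).

(* [M^T M = mu I] for [M = [[m11 m12] [m21 m22]]]. *)
Definition conf_mx (mu m11 m12 m21 m22 : R) : Prop :=
  m11 ^ 2 + m21 ^ 2 = mu /\ m12 ^ 2 + m22 ^ 2 = mu /\ m11 * m12 + m21 * m22 = 0.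

Lemma conf_mx_det mu m11 m12 m21 m22 : conf_mx mu m11 m12 m21 m22 ->
  (m11 * m22 - m12 * m21) ^ 2 = mu ^ 2.
Proof.
  intros (N1 & N2 & O).
  transitivity ((m11 ^ 2 + m21 ^ 2) * (m12 ^ 2 + m22 ^ 2) - (m11 * m12 + m21 * m22) ^ 2);
    [ring|]. rewrite N1, N2, O. ring.
Qed.

(* [M^T y = mu x] forces [y = M x], since [M^T M = mu I]. *)
Lemma conf_mx_transpose_solve mu m11 m12 m21 m22 x1 x2 y1 y2 : 0 < mu ->
  conf_mx mu m11 m12 m21 m22 ->
  y1 * m11 + y2 * m21 = mu * x1 -> y1 * m12 + y2 * m22 = mu * x2 ->
  y1 = x1 * m11 + x2 * m12 /\ y2 = x1 * m21 + x2 * m22.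
Proof.
  intros Hmu HM A B. pose proof (conf_mx_det _ _ _ _ _ HM) as Hd.
  destruct HM as (N1 & N2 & O).
  set (det := m11 * m22 - m12 * m21) in *.
  assert (Hd0 : det <> 0) by (intro E; rewrite E in Hd; nra).
  assert (E1 : (y1 - x1 * m11 - x2 * m12) * det =
     m22 * (y1 * m11 + y2 * m21 - mu * x1) - m21 * (y1 * m12 + y2 * m22 - mu * x2)
     + x1 * (- m22 * (m11 ^ 2 + m21 ^ 2 - mu) + m21 * (m11 * m12 + m21 * m22))
     + x2 * (m21 * (m12 ^ 2 + m22 ^ 2 - mu) - m22 * (m11 * m12 + m21 * m22))) by (unfold det; ring).
  assert (E2 : (y2 - x1 * m21 - x2 * m22) * det =
     m11 * (y1 * m12 + y2 * m22 - mu * x2) - m12 * (y1 * m11 + y2 * m21 - mu * x1)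
     + x1 * (m12 * (m11 ^ 2 + m21 ^ 2 - mu) - m11 * (m11 * m12 + m21 * m22))
     + x2 * (- m11 * (m12 ^ 2 + m22 ^ 2 - mu) + m12 * (m11 * m12 + m21 * m22))) by (unfold det; ring).
  rewrite A, B, N1, N2, O in E1, E2.
  assert (Z1 : (y1 - x1 * m11 - x2 * m12) * det = 0) by (rewrite E1; ring).
  assert (Z2 : (y2 - x1 * m21 - x2 * m22) * det = 0) by (rewrite E2; ring).
  apply Rmult_integral in Z1. apply Rmult_integral in Z2.
  destruct Z1 as [Z1|Z1]; [|tauto]. destruct Z2 as [Z2|Z2]; [|tauto]. split; lra.
Qed.

(* A map multiplying squared distances by [mu] on a set containing a unit
   frame is the restriction of an affine similarity: polarization recovers
   the inner products from the distances to the frame. *)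
Lemma similarity_affine (Dom : C2 -> Prop) (psi : C2 -> C2) mu P0 : 0 < mu ->
  Dom P0 -> Dom (fst P0 + 1, snd P0) -> Dom (fst P0, snd P0 + 1) ->
  (forall a b, Dom a -> Dom b -> sqdist (psi a) (psi b) = mu * sqdist a b) ->
  exists m11 m12 m21 m22 b1 b2, conf_mx mu m11 m12 m21 m22 /\
    forall a, Dom a -> psi a = (b1 + fst (mx_apply m11 m12 m21 m22 a),
                                b2 + snd (mx_apply m11 m12 m21 m22 a)).
Proof.
  intros Hmu D0 D1 D2 Hsim.
  set (P1 := (fst P0 + 1, snd P0)) in *. set (P2 := (fst P0, snd P0 + 1)) in *.
  set (m11 := fst (psi P1) - fst (psi P0)). set (m21 := snd (psi P1) - snd (psi P0)).
  set (m12 := fst (psi P2) - fst (psi P0)). set (m22 := snd (psi P2) - snd (psi P0)).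
  assert (N1 : m11 ^ 2 + m21 ^ 2 = mu).
  { change (sqdist (psi P1) (psi P0) = mu). rewrite Hsim by auto.
    unfold sqdist, P1; cbn [fst snd]; ring. }
  assert (N2 : m12 ^ 2 + m22 ^ 2 = mu).
  { change (sqdist (psi P2) (psi P0) = mu). rewrite Hsim by auto.
    unfold sqdist, P2; cbn [fst snd]; ring. }
  assert (O : m11 * m12 + m21 * m22 = 0).
  { assert (E : (m11 - m12) ^ 2 + (m21 - m22) ^ 2 = 2 * mu).
    { transitivity (sqdist (psi P1) (psi P2)); [unfold m11, m12, m21, m22, sqdist; ring|].
      rewrite Hsim by auto. unfold sqdist, P1, P2; cbn [fst snd]; ring. }
    nra. }
  exists m11, m12, m21, m22,
    (fst (psi P0) - m11 * fst P0 - m12 * snd P0), (snd (psi P0) - m21 * fst P0 - m22 * snd P0).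
  split; [repeat split; auto|].
  intros a Da.
  set (x1 := fst a - fst P0). set (x2 := snd a - snd P0).
  set (y1 := fst (psi a) - fst (psi P0)). set (y2 := snd (psi a) - snd (psi P0)).
  pose proof (Hsim a P0 Da D0) as H0. pose proof (Hsim a P1 Da D1) as H1.
  pose proof (Hsim a P2 Da D2) as H2.
  assert (A : y1 * m11 + y2 * m21 = mu * x1).
  { transitivity ((sqdist (psi a) (psi P0) + (m11 ^ 2 + m21 ^ 2) - sqdist (psi a) (psi P1)) / 2).
    { unfold y1, y2, m11, m21, sqdist. field. }
    rewrite H0, H1, N1. unfold sqdist, x1, P1; cbn [fst snd]. field. }
  assert (B : y1 * m12 + y2 * m22 = mu * x2).
  { transitivity ((sqdist (psi a) (psi P0) + (m12 ^ 2 + m22 ^ 2) - sqdist (psi a) (psi P2)) / 2).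
    { unfold y1, y2, m12, m22, sqdist. field. }
    rewrite H0, H2, N2. unfold sqdist, x2, P2; cbn [fst snd]. field. }
  destruct (conf_mx_transpose_solve mu m11 m12 m21 m22 x1 x2 y1 y2 Hmu
              (conj N1 (conj N2 O)) A B) as [S1 S2].
  unfold mx_apply; simpl. destruct (psi a) as [pa1 pa2]. simpl in *.
  unfold y1, y2, x1, x2 in *. f_equal; lra.
Qed.

Lemma conf_mx_norm mu m11 m12 m21 m22 v1 v2 : conf_mx mu m11 m12 m21 m22 ->
  (m11 * v1 + m12 * v2) ^ 2 + (m21 * v1 + m22 * v2) ^ 2 = mu * (v1 ^ 2 + v2 ^ 2).
Proof.
  intros (N1 & N2 & O).
  transitivity ((m11 ^ 2 + m21 ^ 2) * v1 ^ 2 + (m12 ^ 2 + m22 ^ 2) * v2 ^ 2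
                + 2 * (m11 * m12 + m21 * m22) * v1 * v2); [ring|].
  rewrite N1, N2, O. ring.
Qed.

Lemma conf_mx_fixed_vector mu m11 m12 m21 m22 v1 v2 : conf_mx mu m11 m12 m21 m22 ->
  m11 * v1 + m12 * v2 = v1 -> m21 * v1 + m22 * v2 = v2 -> (v1 <> 0 \/ v2 <> 0) -> mu = 1.
Proof.
  intros HM E1 E2 Hv. pose proof (conf_mx_norm _ _ _ _ _ v1 v2 HM) as N.
  rewrite E1, E2 in N.
  assert (0 < v1 ^ 2 + v2 ^ 2)
    by (destruct Hv as [H|H]; pose proof (pow_nonzero _ 2 H);
        pose proof (pow2_ge_0 v1); pose proof (pow2_ge_0 v2); lra).
  nra.
Qed.

(* A fixed vector [v] of [M] would have [|M v| = |v|]. *)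
Lemma conf_mx_sub_id_det mu m11 m12 m21 m22 : conf_mx mu m11 m12 m21 m22 -> mu <> 1 ->
  (1 - m11) * (1 - m22) - m12 * m21 <> 0.
Proof.
  intros HM Hmu HD. apply Hmu.
  destruct (classic (1 - m22 <> 0 \/ m21 <> 0)) as [Hv|Hv].
  { apply (conf_mx_fixed_vector mu m11 m12 m21 m22 (1 - m22) m21); auto; nra. }
  destruct (classic (m12 <> 0 \/ 1 - m11 <> 0)) as [Hv'|Hv'].
  { apply (conf_mx_fixed_vector mu m11 m12 m21 m22 m12 (1 - m11)); auto; nra. }
  destruct HM as (N1 & _).
  assert (m21 = 0) by (apply NNPP; tauto). assert (1 - m11 = 0) by (apply NNPP; tauto).
  rewrite <- N1. replace m11 with 1 by lra. subst. ring.
Qed.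

Lemma similarity_fixpoint (A : C2 -> C2) mu : 0 < mu -> mu <> 1 ->
  (forall w w', sqdist (A w) (A w') = mu * sqdist w w') -> exists c, A c = c.
Proof.
  intros Hmu Hm1 HA.
  destruct (similarity_affine (fun _ => True) A mu (0, 0) Hmu I I I (fun a b _ _ => HA a b))
    as (m11 & m12 & m21 & m22 & b1 & b2 & HM & Hf).
  pose proof (conf_mx_sub_id_det _ _ _ _ _ HM Hm1) as HD.
  set (D := (1 - m11) * (1 - m22) - m12 * m21) in *.
  exists ((b1 * (1 - m22) + m12 * b2) / D, (b2 * (1 - m11) + m21 * b1) / D).
  rewrite Hf; auto. unfold mx_apply; simpl. f_equal; unfold D in *; field; auto.
Qed.

Lemma similarity_fixpoint_unique (A : C2 -> C2) mu c c' : mu <> 1 ->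
  (forall w w', sqdist (A w) (A w') = mu * sqdist w w') -> A c = c -> A c' = c' -> c = c'.
Proof.
  intros Hm1 HA Hc Hc'. apply sqdist_eq0.
  pose proof (HA c c') as E. rewrite Hc, Hc' in E.
  assert ((1 - mu) * sqdist c c' = 0) by lra.
  destruct (Rmult_integral _ _ H); [lra|auto].
Qed.

Lemma quad_form_product_norm4 (p r s p' r' s' mu : R) : 0 < p -> 0 < s -> 0 < mu ->
  (forall x y, (p * x ^ 2 + 2 * r * x * y + s * y ^ 2) * (p' * x ^ 2 + 2 * r' * x * y + s' * y ^ 2)
               = mu * (x ^ 2 + y ^ 2) ^ 2) ->
  r = 0 /\ p = s.
Proof.
  intros Hp Hs Hmu H.
  pose proof (H 1 0) as E10. pose proof (H 0 1) as E01. pose proof (H 1 1) as E11.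
  pose proof (H 1 (-1)) as E1m. pose proof (H 1 2) as E12.
  ring_simplify in E10. ring_simplify in E01. ring_simplify in E11.
  ring_simplify in E1m. ring_simplify in E12.
  assert (C4 : p * p' = mu) by lra.
  assert (C0 : s * s' = mu) by lra.
  assert (C2 : p * s' + s * p' + 4 * r * r' = 2 * mu) by lra.
  assert (C3 : p * r' + r * p' = 0) by lra.
  assert (C1 : r * s' + s * r' = 0) by lra.
  assert (Hp' : 0 < p') by nra.
  assert (K1 : mu * (p - s) ^ 2 = 4 * r ^ 2 * p' * s).
  { transitivity (p ^ 2 * (s * s') + s ^ 2 * (p * p') - p * s * (p * s' + s * p' + 4 * r * r')
                  + 4 * s * r * (p * r' + r * p')); [|ring].
    rewrite C4, C0, C2, C3. ring. }
  assert (K2 : mu * (r * (s - p) * (s + p)) = 0).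
  { transitivity (p * s * (s * (p * r' + r * p') - p * (r * s' + s * r'))
                  + r * (s ^ 2 * (mu - p * p') - p ^ 2 * (mu - s * s'))); [ring|].
    rewrite C4, C0, C3, C1. ring. }
  destruct (Rmult_integral _ _ K2) as [|K3]; [lra|].
  destruct (Rmult_integral _ _ K3) as [K4|]; [|lra].
  destruct (Rmult_integral _ _ K4) as [->|Esp].
  - split; auto.
    assert (E : (p - s) ^ 2 = 0) by (apply (Rmult_eq_reg_l mu); [rewrite K1; ring|lra]).
    apply Rminus_diag_uniq, Rsqr_0_uniq. unfold Rsqr. rewrite <- E. ring.
  - assert (s = p) by lra. subst s. split; auto.
    assert (E : r ^ 2 * (4 * p' * p) = 0)
      by (transitivity (mu * (p - p) ^ 2); [rewrite K1|]; ring).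
    destruct (Rmult_integral _ _ E) as [E'|]; [|nra].
    apply Rsqr_0_uniq. unfold Rsqr. rewrite <- E'. ring.
Qed.

(** * Affine maps *)

Definition affine_map (a b c d e f : R) (p : C2) : C2 :=
  (a * fst p + b * snd p + e, c * fst p + d * snd p + f).

Definition affine_inv (a b c d e f : R) (p : C2) : C2 :=
  ((d * (fst p - e) - b * (snd p - f)) / (a * d - b * c),
   (- c * (fst p - e) + a * (snd p - f)) / (a * d - b * c)).

Lemma affine_map_inv a b c d e f p : a * d - b * c <> 0 ->
  affine_map a b c d e f (affine_inv a b c d e f p) = p.
Proof. intros H. destruct p as [x y]. unfold affine_map, affine_inv; simpl. f_equal; field; auto. Qed.

Lemma affine_inv_map a b c d e f p : a * d - b * c <> 0 ->
  affine_inv a b c d e f (affine_map a b c d e f p) = p.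
Proof. intros H. destruct p as [x y]. unfold affine_map, affine_inv; simpl. f_equal; field; auto. Qed.

Definition lin_sq (a b c d w1 w2 : R) : R := (a * w1 + b * w2) ^ 2 + (c * w1 + d * w2) ^ 2.

Lemma sqdist_affine a b c d e f p p' :
  sqdist (affine_map a b c d e f p) (affine_map a b c d e f p')
  = lin_sq a b c d (fst p - fst p') (snd p - snd p').
Proof. unfold sqdist, affine_map, lin_sq; cbn [fst snd]. ring. Qed.

Lemma lin_sq_pos a b c d w1 w2 : a * d - b * c <> 0 -> (w1 <> 0 \/ w2 <> 0) ->
  0 < lin_sq a b c d w1 w2.
Proof.
  intros Hd Hw. unfold lin_sq.
  destruct (Req_dec (a * w1 + b * w2) 0) as [E1|E1].
  - destruct (Req_dec (c * w1 + d * w2) 0) as [E2|E2].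
    + exfalso.
      assert (Z1 : (a * d - b * c) * w1 = 0)
        by (transitivity (d * (a * w1 + b * w2) - b * (c * w1 + d * w2)); [ring|rewrite E1, E2; ring]).
      assert (Z2 : (a * d - b * c) * w2 = 0)
        by (transitivity (a * (c * w1 + d * w2) - c * (a * w1 + b * w2)); [ring|rewrite E1, E2; ring]).
      apply Rmult_integral in Z1; apply Rmult_integral in Z2. tauto.
    + pose proof (pow2_ge_0 (a * w1 + b * w2)). pose proof (pow_nonzero _ 2 E2). pose proof (pow2_ge_0 (c * w1 + d * w2)). lra.
  - pose proof (pow2_ge_0 (c * w1 + d * w2)). pose proof (pow_nonzero _ 2 E1). pose proof (pow2_ge_0 (a * w1 + b * w2)). lra.
Qed.

Lemma lin_sq_scale a b c d t w1 w2 : lin_sq a b c d (t * w1) (t * w2) = t ^ 2 * lin_sq a b c d w1 w2.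
Proof. unfold lin_sq. ring. Qed.

Section AffineSimilarity.

Variables (a b c d e f : R) (h : S -> S).
Hypothesis det_nz : a * d - b * c <> 0.
Hypothesis h_affine : forall p, h (Some p) = Some (affine_map a b c d e f p).
Hypothesis h_inf : h None = None.
Hypothesis lin_conf : a ^ 2 + c ^ 2 = b ^ 2 + d ^ 2 /\ a * b + c * d = 0.

Let T := affine_map a b c d e f.
Let Ti := affine_inv a b c d e f.
Let rho := a ^ 2 + c ^ 2.

Let T_Ti p : T (Ti p) = p.
Proof. apply affine_map_inv; auto. Qed.

Let Ti_T p : Ti (T p) = p.
Proof. apply affine_inv_map; auto. Qed.

Let rho_pos : 0 < rho.
Proof.
  unfold rho. replace (a ^ 2 + c ^ 2) with (lin_sq a b c d 1 0) by (unfold lin_sq; ring).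
  apply lin_sq_pos; [auto|left; lra].
Qed.

Let cdist_T p p' : cdist (T p) (T p') = sqrt rho * cdist p p'.
Proof.
  assert (Hd : sqdist (T p) (T p') = rho * sqdist p p').
  { unfold T. rewrite sqdist_affine. destruct lin_conf as [S1 S2].
    unfold lin_sq, sqdist, rho.
    transitivity ((a ^ 2 + c ^ 2) * (fst p - fst p') ^ 2 + 2 * (a * b + c * d) * (fst p - fst p') * (snd p - snd p')
                  + (b ^ 2 + d ^ 2) * (snd p - snd p') ^ 2); [ring|].
    rewrite S2, <- S1. ring. }
  unfold cdist, cnorm. cbn [fst snd]. fold (sqdist (T p) (T p')) (sqdist p p').
  rewrite Hd, sqrt_mult; auto using sqdist_ge0. lra.
Qed.

Lemma affine_similarity_image_circle A : gen_circle A -> gen_circle (fun w => exists z, A z /\ h z = w).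
Proof.
  intros [(c0 & r & Hr & HA)|(al & be & ga & Hab & HA)].
  - left. exists (T c0), (sqrt rho * r).
    split; [apply Rmult_lt_0_compat; auto using sqrt_lt_R0|].
    intros w. split.
    + intros (z & Az & Ez). apply HA in Az. destruct Az as (p & -> & Hp).
      exists (T p). rewrite h_affine in Ez. split; auto. rewrite cdist_T, Hp. auto.
    + intros (p' & -> & Hp'). exists (Some (Ti p')). split.
      * apply HA. exists (Ti p'). split; auto.
        rewrite <- (T_Ti p'), cdist_T in Hp'. pose proof (sqrt_lt_R0 rho rho_pos).
        apply (Rmult_eq_reg_l (sqrt rho)); lra.
      * rewrite h_affine, T_Ti; auto.
  - right. set (D := a * d - b * c).
    set (al' := (al * d - be * c) / D). set (be' := (be * a - al * b) / D).
    set (ga' := ga + al' * e + be' * f).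
    exists al', be', ga'. split.
    + apply NNPP. intros Hn.
      assert (al' = 0) by (apply NNPP; tauto). assert (be' = 0) by (apply NNPP; tauto).
      unfold al', be' in *.
      assert (X1 : al * d - be * c = 0) by (apply (Rmult_eq_reg_r (/ D)); [lra|apply Rinv_neq_0_compat; auto]).
      assert (X2 : be * a - al * b = 0) by (apply (Rmult_eq_reg_r (/ D)); [lra|apply Rinv_neq_0_compat; auto]).
      assert (Y1 : al * D = 0) by (unfold D; transitivity (a * (al * d - be * c) + c * (be * a - al * b)); [ring|rewrite X1, X2; ring]).
      assert (Y2 : be * D = 0) by (unfold D; transitivity (d * (be * a - al * b) + b * (al * d - be * c)); [ring|rewrite X1, X2; ring]).
      apply Rmult_integral in Y1; apply Rmult_integral in Y2. unfold D in *. destruct Hab; tauto.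
    + assert (Key : forall p', al * fst (Ti p') + be * snd (Ti p') - ga = al' * fst p' + be' * snd p' - ga').
      { intros [x y]. unfold Ti, affine_inv, ga', al', be'; cbn [fst snd]. fold D. field. auto. }
      intros w. split.
      * intros (z & Az & Ez). apply HA in Az. destruct Az as [->|(p & -> & Hp)].
        -- left. rewrite <- Ez. auto.
        -- right. exists (T p). rewrite h_affine in Ez. split; auto.
           pose proof (Key (T p)) as K. rewrite Ti_T in K. lra.
      * intros [->|(p' & -> & Hp')].
        -- exists None. split; auto. apply HA. left; auto.
        -- exists (Some (Ti p')). split.
           ++ apply HA. right. exists (Ti p'). split; auto. pose proof (Key p'). lra.
           ++ rewrite h_affine, T_Ti; auto.
Qed.

End AffineSimilarity.

(* Comparing [F] at [q + v] and [q - v], where the inversion gives opposite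
   values, isolates [|L M v|^2 |L v|^2] for the linear part [L] of the affine map. *)
Lemma affine_conj_inversion_norm4 a b c d e f (F : C2 -> C2) q m11 m12 m21 m22 b1 b2 k :
  a * d - b * c <> 0 ->
  (forall z, z <> q -> F z = (b1 + fst (mx_apply m11 m12 m21 m22 (inv_at q z)),
                              b2 + snd (mx_apply m11 m12 m21 m22 (inv_at q z)))) ->
  (forall z u, z <> q -> u <> q ->
     sqdist (affine_map a b c d e f (F z)) (affine_map a b c d e f (F u))
     * (sqdist (affine_map a b c d e f z) (affine_map a b c d e f q)
        * sqdist (affine_map a b c d e f u) (affine_map a b c d e f q))
     = k * sqdist (affine_map a b c d e f z) (affine_map a b c d e f u)) ->
  forall v1 v2, lin_sq a b c d (m11 * v1 + m12 * v2) (m21 * v1 + m22 * v2) * lin_sq a b c d v1 v2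
                = k * (v1 ^ 2 + v2 ^ 2) ^ 2.
Proof.
  intros Hdet HF HK v1 v2.
  destruct (classic (v1 <> 0 \/ v2 <> 0)) as [Hv|Hv].
  2: { assert (v1 = 0) by (apply NNPP; tauto). assert (v2 = 0) by (apply NNPP; tauto).
       subst. unfold lin_sq. ring. }
  set (n := v1 ^ 2 + v2 ^ 2).
  assert (Hn : 0 < n)
    by (destruct Hv as [H|H]; pose proof (pow_nonzero _ 2 H);
        pose proof (pow2_ge_0 v1); pose proof (pow2_ge_0 v2); unfold n; lra).
  set (z := (fst q + v1, snd q + v2)). set (u := (fst q - v1, snd q - v2)).
  assert (Hz : z <> q).
  { intro E. assert (fst z = fst q /\ snd z = snd q) by (rewrite E; auto).
    unfold z in *; simpl in *. destruct Hv; lra. }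
  assert (Hu : u <> q).
  { intro E. assert (fst u = fst q /\ snd u = snd q) by (rewrite E; auto).
    unfold u in *; simpl in *. destruct Hv; lra. }
  pose proof (lin_sq_pos a b c d v1 v2 Hdet Hv) as HQ.
  assert (Hzq : sqdist z q = n) by (unfold sqdist, z, n; simpl; ring).
  assert (Huq : sqdist u q = n) by (unfold sqdist, u, n; simpl; ring).
  assert (D1 : fst (F z) - fst (F u) = 2 / n * (m11 * v1 + m12 * v2)).
  { rewrite (HF z Hz), (HF u Hu). unfold inv_at, mx_apply. rewrite Hzq, Huq.
    unfold z, u; simpl. field. lra. }
  assert (D2 : snd (F z) - snd (F u) = 2 / n * (m21 * v1 + m22 * v2)).
  { rewrite (HF z Hz), (HF u Hu). unfold inv_at, mx_apply. rewrite Hzq, Huq.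
    unfold z, u; simpl. field. lra. }
  pose proof (HK z u Hz Hu) as E. rewrite !sqdist_affine, D1, D2 in E.
  replace (fst z - fst u) with (2 * v1) in E by (unfold z, u; simpl; ring).
  replace (snd z - snd u) with (2 * v2) in E by (unfold z, u; simpl; ring).
  replace (fst z - fst q) with (1 * v1) in E by (unfold z; simpl; ring).
  replace (snd z - snd q) with (1 * v2) in E by (unfold z; simpl; ring).
  replace (fst u - fst q) with (-1 * v1) in E by (unfold u; simpl; ring).
  replace (snd u - snd q) with (-1 * v2) in E by (unfold u; simpl; ring).
  rewrite !lin_sq_scale in E.
  set (Q := lin_sq a b c d v1 v2) in *.
  set (QM := lin_sq a b c d (m11 * v1 + m12 * v2) (m21 * v1 + m22 * v2)) in *.
  transitivity ((2 / n) ^ 2 * QM * (1 ^ 2 * Q * ((-1) ^ 2 * Q)) * n ^ 2 / (4 * Q));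
    [field; lra|].
  rewrite E. field. lra.
Qed.

Lemma lin_conf_of_norm4 a b c d m11 m12 m21 m22 k : a * d - b * c <> 0 -> 0 < k ->
  (forall v1 v2, lin_sq a b c d (m11 * v1 + m12 * v2) (m21 * v1 + m22 * v2) * lin_sq a b c d v1 v2
                 = k * (v1 ^ 2 + v2 ^ 2) ^ 2) ->
  a ^ 2 + c ^ 2 = b ^ 2 + d ^ 2 /\ a * b + c * d = 0.
Proof.
  intros Hdet Hk Hrel.
  assert (Hp : 0 < a ^ 2 + c ^ 2).
  { replace (a ^ 2 + c ^ 2) with (lin_sq a b c d 1 0) by (unfold lin_sq; ring).
    apply lin_sq_pos; [auto|left; lra]. }
  assert (Hs : 0 < b ^ 2 + d ^ 2).
  { replace (b ^ 2 + d ^ 2) with (lin_sq a b c d 0 1) by (unfold lin_sq; ring).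
    apply lin_sq_pos; [auto|right; lra]. }
  set (A11 := a * m11 + b * m21). set (A12 := a * m12 + b * m22).
  set (A21 := c * m11 + d * m21). set (A22 := c * m12 + d * m22).
  destruct (quad_form_product_norm4 (a ^ 2 + c ^ 2) (a * b + c * d) (b ^ 2 + d ^ 2)
              (A11 ^ 2 + A21 ^ 2) (A11 * A12 + A21 * A22) (A12 ^ 2 + A22 ^ 2) k Hp Hs Hk)
    as [Hr Hps].
  { intros x y. rewrite <- (Hrel x y). unfold lin_sq, A11, A12, A21, A22. ring. }
  split; lra.
Qed.

Lemma cross_ratio_inf_inversion_form (F : C2 -> C2) q k : 0 < k ->
  (forall z u, z <> q -> u <> q -> sqdist (F z) (F u) * (sqdist z q * sqdist u q) = k * sqdist z u) ->
  exists m11 m12 m21 m22 b1 b2, forall z, z <> q ->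
    F z = (b1 + fst (mx_apply m11 m12 m21 m22 (inv_at q z)),
           b2 + snd (mx_apply m11 m12 m21 m22 (inv_at q z))).
Proof.
  intros Hk HK.
  pose proof (cross_ratio_inf_similarity F q k HK) as Hsim.
  destruct (similarity_affine (fun x => x <> q) (fun x => F (inv_at q x)) k
              (fst q + 1, snd q + 1) Hk) as (m11 & m12 & m21 & m22 & b1 & b2 & _ & Hf);
    try (apply neq_fst; simpl; lra); auto.
  exists m11, m12, m21, m22, b1, b2. intros z Hz.
  rewrite <- (Hf _ (inv_at_neq q z Hz)), inv_at_invol; auto.
Qed.

Definition fin_part (z : S) : C2 := match z with Some w => w | None => (0, 0) end.

Lemma boundary_pole_some (f : S -> S) q z : f (Some q) = None ->
  (forall z u, f z = f u -> z = u) -> z <> q -> f (Some z) = Some (fin_part (f (Some z))).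
Proof.
  intros Hq Hinj Hz. destruct (f (Some z)) eqn:E; auto.
  rewrite <- Hq in E. apply Hinj in E. congruence.
Qed.

Lemma boundary_pole_sqdist g f q : isometry g -> boundary_map g f -> f (Some q) = None ->
  (forall z u, f z = f u -> z = u) ->
  exists k, 0 < k /\ forall z u, z <> q -> u <> q ->
    sqdist (fin_part (f (Some z))) (fin_part (f (Some u))) * (sqdist z q * sqdist u q)
    = k * sqdist z u.
Proof.
  intros Hg Hf Hq Hinj. apply cross_ratio_inf_const.
  - intros z1 z2 z3 H1 H2 H3.
    apply (boundary_cross_ratio_inf g f); auto; apply (boundary_pole_some f q); auto.
  - intros z u Hz Hu E.
    assert (f (Some z) = f (Some u))
      by (rewrite (boundary_pole_some f q z), (boundary_pole_some f q u), E; auto).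
    apply Hinj in H. congruence.
Qed.

Lemma affine_conj_pole_lin_conf h a b c d e f g1 g2 f1 f2 q :
  a * d - b * c <> 0 -> (forall p, h (Some p) = Some (affine_map a b c d e f p)) ->
  h None = None -> (forall w, exists z, h z = w) ->
  isometry g1 -> isometry g2 -> boundary_map g1 f1 -> boundary_map g2 f2 ->
  (forall z, f2 (h z) = h (f1 z)) ->
  f1 (Some q) = None -> (forall z u, f1 z = f1 u -> z = u) ->
  a ^ 2 + c ^ 2 = b ^ 2 + d ^ 2 /\ a * b + c * d = 0.
Proof.
  intros Hdet Hh HhN Hsurj I1 I2 B1 B2 Hc Hq Hinj.
  set (T := affine_map a b c d e f) in *.
  assert (Hhinj : forall z u, h z = h u -> z = u).
  { intros [p|] [p'|] E; rewrite ?Hh, ?HhN in E; try discriminate; auto.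
    assert (E' : T p = T p') by congruence.
    rewrite <- (affine_inv_map a b c d e f p Hdet), <- (affine_inv_map a b c d e f p' Hdet).
    fold T. rewrite E'. auto. }
  assert (Hq2 : f2 (Some (T q)) = None) by (rewrite <- Hh, Hc, Hq; auto).
  assert (Hinj2 : forall w w', f2 w = f2 w' -> w = w').
  { intros w w' E. destruct (Hsurj w) as [z <-], (Hsurj w') as [u <-].
    rewrite !Hc in E. apply Hhinj, Hinj in E. congruence. }
  destruct (boundary_pole_sqdist g1 f1 q I1 B1 Hq Hinj) as (k1 & Hk1 & K1).
  destruct (boundary_pole_sqdist g2 f2 (T q) I2 B2 Hq2 Hinj2) as (k2 & Hk2 & K2).
  destruct (cross_ratio_inf_inversion_form _ q k1 Hk1 K1) as (m11 & m12 & m21 & m22 & b1 & b2 & HF).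
  apply (lin_conf_of_norm4 a b c d m11 m12 m21 m22 k2 Hdet Hk2).
  apply (affine_conj_inversion_norm4 a b c d e f _ q m11 m12 m21 m22 b1 b2 k2 Hdet HF).
  intros z u Hz Hu.
  assert (HT : forall x, x <> q -> T x <> T q).
  { intros x Hx E. assert (Some x = Some q) by (apply Hhinj; rewrite !Hh; congruence).
    congruence. }
  assert (Hconj : forall x, x <> q -> T (fin_part (f1 (Some x))) = fin_part (f2 (Some (T x)))).
  { intros x Hx. rewrite <- Hh, Hc, (boundary_pole_some f1 q x), Hh; auto. }
  rewrite !Hconj; auto.
Qed.

(** * Cocompact lattices *)

Definition hor (x : H3) : C2 := (hx x, hy x).
Definition pt (w : C2) (t : R) : H3 := mkH (fst w) (snd w) (exp t) (exp_pos t).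

Lemma hor_pt w t : hor (pt w t) = w.
Proof. destruct w; reflexivity. Qed.

Lemma ht_pt w t : ht (pt w t) = exp t.
Proof. reflexivity. Qed.

Lemma hform_hor p q : hform p q = sqdist (hor p) (hor q) + ht p ^ 2 + ht q ^ 2.
Proof. unfold hform, sqdist, hor; simpl. ring. Qed.

Lemma hcosh_hor p q :
  hcosh p q = 1 + (sqdist (hor p) (hor q) + (ht p - ht q) ^ 2) / (2 * ht p * ht q).
Proof. reflexivity. Qed.

Lemma sqdist_hor_bound N q c : Rabs (hx q) < N -> Rabs (hy q) < N ->
  sqdist (hor q) c <= (N + Rabs (fst c)) ^ 2 + (N + Rabs (snd c)) ^ 2.
Proof.
  intros Hx Hy. unfold sqdist, hor; cbn [fst snd].
  assert (Rabs (hx q - fst c) <= N + Rabs (fst c)).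
  { unfold Rminus. eapply Rle_trans; [apply Rabs_triang|]. rewrite Rabs_Ropp. lra. }
  assert (Rabs (hy q - snd c) <= N + Rabs (snd c)).
  { unfold Rminus. eapply Rle_trans; [apply Rabs_triang|]. rewrite Rabs_Ropp. lra. }
  rewrite <- (pow2_abs (hx q - fst c)), <- (pow2_abs (hy q - snd c)).
  pose proof (Rabs_pos (hx q - fst c)); pose proof (Rabs_pos (hy q - snd c)).
  apply Rplus_le_compat; apply pow_incr; lra.
Qed.

Definition slab (n : nat) (q : H3) : Prop :=
  / INR (Datatypes.S n) < ht q /\ ht q < INR (Datatypes.S n) /\
  Rabs (hx q) < INR (Datatypes.S n) /\ Rabs (hy q) < INR (Datatypes.S n).

Lemma slab_open n : hopen (slab n).
Proof.
  intros p (H1 & H2 & H3 & H4). set (N := INR (Datatypes.S n)) in *.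
  set (m := Rmin (Rmin (ht p - / N) (N - ht p)) (Rmin (N - Rabs (hx p)) (N - Rabs (hy p)))).
  assert (Hm : 0 < m) by (unfold m; repeat apply Rmin_glb_lt; lra).
  assert (m <= ht p - / N) by (unfold m; eapply Rle_trans; [apply Rmin_l|apply Rmin_l]).
  assert (m <= N - ht p) by (unfold m; eapply Rle_trans; [apply Rmin_l|apply Rmin_r]).
  assert (m <= N - Rabs (hx p)) by (unfold m; eapply Rle_trans; [apply Rmin_r|apply Rmin_l]).
  assert (m <= N - Rabs (hy p)) by (unfold m; eapply Rle_trans; [apply Rmin_r|apply Rmin_r]).
  destruct (hdist_small_coords p m Hm) as (e & He & Hc). exists e. split; auto.
  intros q Hq. destruct (Hc q Hq) as (A1 & A2 & A3).
  apply Rabs_def2 in A1.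
  pose proof (Rabs_triang (hx q - hx p) (hx p)) as T5.
  pose proof (Rabs_triang (hy q - hy p) (hy p)) as T6.
  replace (hx q - hx p + hx p) with (hx q) in T5 by ring.
  replace (hy q - hy p + hy p) with (hy q) in T6 by ring.
  unfold slab. fold N. repeat split; lra.
Qed.

Lemma slab_mono n m q : (n <= m)%nat -> slab n q -> slab m q.
Proof.
  intros Hnm (H1 & H2 & H3 & H4).
  assert (L : INR (Datatypes.S n) <= INR (Datatypes.S m)) by (apply le_INR; lia).
  assert (P : 0 < INR (Datatypes.S n)) by (apply lt_0_INR; lia).
  assert (/ INR (Datatypes.S m) <= / INR (Datatypes.S n)) by (apply Rinv_le_contravar; lra).
  repeat split; lra.
Qed.

Lemma slab_cover p : exists n, slab n p.
Proof.
  pose proof (ht_pos p).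
  destruct (nat_unbounded (ht p + / ht p + Rabs (hx p) + Rabs (hy p))) as [n Hn].
  exists n. pose proof (Rabs_pos (hx p)); pose proof (Rabs_pos (hy p)).
  assert (0 < / ht p) by (apply Rinv_0_lt_compat; auto).
  assert (INR n < INR (Datatypes.S n)) by (apply lt_INR; lia).
  repeat split; try lra.
  rewrite <- (Rinv_inv (ht p)). apply Rinv_lt_contravar; nra.
Qed.

Lemma hcompact_bounded K : hcompact K -> exists N, 1 <= N /\ forall q, K q ->
  / N < ht q /\ ht q < N /\ Rabs (hx q) < N /\ Rabs (hy q) < N.
Proof.
  intros HK. destruct (HK nat slab slab_open (fun p _ => slab_cover p)) as [l Hl].
  exists (INR (Datatypes.S (list_max l))). split; [rewrite S_INR; pose proof (pos_INR (list_max l)); lra|].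
  intros q Kq. destruct (Hl q Kq) as (i & Hi & Ui). apply (slab_mono i); auto.
  pose proof (proj1 (list_max_le l (list_max l)) (Nat.le_refl _)) as Hmax.
  rewrite Forall_forall in Hmax. auto.
Qed.

Lemma hcompact_cv (y : H3) (x : nat -> H3) : Un_cv (fun n => hcosh y (x n)) 1 ->
  hcompact (fun p => p = y \/ exists n, p = x n).
Proof.
  intros Hcv I U HU Hcov.
  destruct (Hcov y (or_introl eq_refl)) as [i0 Hi0].
  destruct (HU i0 y Hi0) as (eps & Heps & Hball).
  destruct (hdist_lt_of_hcosh eps Heps) as (eta & Heta & Hsmall).
  destruct (Hcv eta Heta) as [N0 HN0].
  assert (Hfar : forall n, (N0 <= n)%nat -> U i0 (x n)).
  { intros n Hn. apply Hball, Hsmall. specialize (HN0 n Hn).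
    unfold Rdist, R_dist in HN0. apply Rabs_def2 in HN0. lra. }
  assert (Hnear : forall M, exists l, forall n, (n < M)%nat -> exists i, In i l /\ U i (x n)).
  { induction M as [|M [l Hl]].
    - exists nil. intros n Hn. lia.
    - destruct (Hcov (x M) (or_intror (ex_intro _ M eq_refl))) as [iM HiM].
      exists (iM :: l). intros n Hn. destruct (Nat.eq_dec n M) as [->|Hne].
      + exists iM. split; [left|]; auto.
      + destruct (Hl n ltac:(lia)) as (i & Hi & Ui). exists i. split; [right|]; auto. }
  destruct (Hnear N0) as [l Hl].
  exists (i0 :: l). intros p [->|[n ->]].
  - exists i0. split; [left|]; auto.
  - destruct (Nat.le_gt_cases N0 n) as [Hn|Hn].
    + exists i0. split; [left|]; auto.
    + destruct (Hl n Hn) as (i & Hi & Ui). exists i. split; [right|]; auto.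
Qed.

Lemma injective_seq_not_in_list {A : Type} (v : nat -> A) (l : list A) :
  (forall n, In (v n) l) -> (forall n m, v n = v m -> n = m) -> False.
Proof.
  intros Hin Hinj.
  assert (ND : NoDup (map v (seq 0 (Datatypes.S (length l))))).
  { apply NoDup_map_NoDup_ForallPairs; [|apply seq_NoDup]. intros a b _ _ E. auto. }
  assert (INC : incl (map v (seq 0 (Datatypes.S (length l)))) l).
  { intros x Hx. apply in_map_iff in Hx. destruct Hx as (n & <- & _). apply Hin. }
  pose proof (NoDup_incl_length ND INC) as Hlen.
  rewrite length_map, length_seq in Hlen. lia.
Qed.

(* Proper discontinuity, applied to the compact set [{y} ∪ {e n y | n}]. *)
Lemma nice_lattice_discrete G (e : nat -> H3 -> H3) y : nice_lattice G ->
  (forall n, G (e n)) -> Un_cv (fun n => hcosh y (e n y)) 1 ->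
  (forall n m, hcosh y (e n y) = hcosh y (e m y) -> n = m) -> False.
Proof.
  intros (_ & _ & _ & _ & _ & Gpd & _) Ge Hcv Hinj.
  destruct (Gpd _ (hcompact_cv y (fun n => e n y) Hcv)) as [L HL].
  apply (injective_seq_not_in_list (fun n => hcosh y (e n y)) (map (fun phi => hcosh y (phi y)) L));
    auto.
  intros n. destruct (HL (e n) (Ge n)) as (phi & Hphi & Eq).
  - exists y. split; [left|right; exists n]; auto.
  - rewrite Eq. apply in_map_iff. exists phi. auto.
Qed.

Lemma pow_lt_1_inj r n m : 0 < r < 1 -> r ^ n = r ^ m -> n = m.
Proof.
  intros Hr E.
  assert (Hdec : forall a b, (a < b)%nat -> r ^ b < r ^ a).
  { intros a b Hab. replace b with (a + (b - a))%nat by lia. rewrite pow_add.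
    pose proof (pow_lt_1_compat r (b - a) ltac:(lra) ltac:(lia)) as [_ P].
    pose proof (pow_lt r a ltac:(lra)). nra. }
  destruct (Nat.lt_trichotomy n m) as [H|[H|H]]; auto; specialize (Hdec _ _ H); lra.
Qed.

Lemma Un_cv_pow_lt_1 r c : 0 < r < 1 -> Un_cv (fun n => 1 + r ^ n * c) 1.
Proof.
  intros Hr eps Heps. destruct (Req_dec c 0) as [->|Hc].
  { exists 0%nat. intros n _. unfold Rdist, R_dist. rewrite Rmult_0_r, Rplus_0_r, Rminus_diag, Rabs_R0. auto. }
  assert (Hca : 0 < Rabs c) by (apply Rabs_pos_lt; auto).
  destruct (pow_lt_1_zero r ltac:(rewrite Rabs_pos_eq; lra) (eps / Rabs c)
              ltac:(apply Rdiv_lt_0_compat; lra)) as [N HN].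
  exists N. intros n Hn. unfold Rdist, R_dist.
  replace (1 + r ^ n * c - 1) with (r ^ n * c) by ring. rewrite Rabs_mult.
  specialize (HN n Hn). apply (Rmult_lt_compat_r (Rabs c)) in HN; auto.
  replace (eps / Rabs c * Rabs c) with eps in HN by (field; lra). auto.
Qed.

Lemma lattice_iter_closed (G : (H3 -> H3) -> Prop) g : nice_lattice G -> G g ->
  forall n, G (fun x => Nat.iter n g x).
Proof.
  intros (_ & Gid & Gcomp & _) Gg n. induction n as [|n IH]; [exact Gid|exact (Gcomp g _ Gg IH)].
Qed.

Lemma iter_fixpoint {A : Type} (f : A -> A) c n : f c = c -> Nat.iter n f c = c.
Proof. intros Hc. induction n as [|n IH]; simpl; [|rewrite IH]; auto. Qed.

Lemma sqdist_iter_fix (A : C2 -> C2) mu c w n : A c = c ->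
  (forall w w', sqdist (A w) (A w') = mu * sqdist w w') ->
  sqdist (Nat.iter n A w) c = mu ^ n * sqdist w c.
Proof.
  intros Hc HA. induction n as [|n IH]; simpl; [ring|].
  rewrite <- Hc at 1. rewrite HA, IH. ring.
Qed.

Definition p0 : H3 := pt (0, 0) 0.

Lemma ht_p0 : ht p0 = 1.
Proof. apply exp_0. Qed.

Section LatticeFixingInf.

Variable G : (H3 -> H3) -> Prop.
Hypothesis G_nice : nice_lattice G.
Hypothesis G_scale : forall g, G g -> forall x, ht (g x) = ht (g p0) * ht x.

Let lam g := ht (g p0).
Let hmap g w := hor (g (pt w 0)).

Let lam_pos g : 0 < lam g.
Proof. apply ht_pos. Qed.

Let G_isometry g : G g -> isometry g.
Proof. destruct G_nice as [Hiso _]. auto. Qed.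

Let hor_scale g x y : G g ->
  sqdist (hor (g x)) (hor (g y)) = lam g ^ 2 * sqdist (hor x) (hor y).
Proof.
  intros Gg. pose proof (isometry_hform g x y (G_isometry g Gg)) as E.
  rewrite !hform_hor, (G_scale g Gg x), (G_scale g Gg y) in E. fold (lam g) in E.
  pose proof (ht_pos x); pose proof (ht_pos y).
  apply (Rmult_eq_reg_r (ht x * ht y)); [|nra].
  transitivity ((sqdist (hor (g x)) (hor (g y)) + (lam g * ht x) ^ 2 + (lam g * ht y) ^ 2) * (ht x * ht y)
                - lam g ^ 2 * (ht x ^ 2 + ht y ^ 2) * (ht x * ht y)); [ring|].
  rewrite E. ring.
Qed.

Let hor_hmap g x : G g -> hor (g x) = hmap g (hor x).
Proof.
  intros Gg. apply sqdist_eq0. unfold hmap. rewrite hor_scale, hor_pt, sqdist_refl; auto. ring.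
Qed.

Let hmap_sqdist g w w' : G g -> sqdist (hmap g w) (hmap g w') = lam g ^ 2 * sqdist w w'.
Proof. intros Gg. unfold hmap. rewrite hor_scale, !hor_pt; auto. Qed.

Let hmap_comp g1 g2 w : G g1 -> hmap (fun x => g1 (g2 x)) w = hmap g1 (hmap g2 w).
Proof. intros Gg1. unfold hmap at 1. rewrite hor_hmap; auto. Qed.

Let hmap_inv g g' w : G g -> (forall x, g (g' x) = x) -> hmap g (hmap g' w) = w.
Proof. intros Gg Hgg'. rewrite <- hmap_comp; auto. unfold hmap. rewrite Hgg'. apply hor_pt. Qed.

Let lam_inv g g' : G g -> (forall x, g (g' x) = x) -> lam g * lam g' = 1.
Proof. intros Gg Hgg'. unfold lam. rewrite <- (G_scale g Gg), Hgg'. apply ht_p0. Qed.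

Let ht_iter g x n : G g -> ht (Nat.iter n g x) = lam g ^ n * ht x.
Proof.
  intros Gg. induction n as [|n IH]; simpl; [ring|]. rewrite (G_scale g Gg), IH. fold (lam g). ring.
Qed.

Let hor_iter g x n : G g -> hor (Nat.iter n g x) = Nat.iter n (hmap g) (hor x).
Proof. intros Gg. induction n as [|n IH]; simpl; auto. rewrite hor_hmap, IH; auto. Qed.

Let lattice_expanding : exists g, G g /\ 1 < lam g.
Proof.
  destruct G_nice as (_ & _ & _ & _ & _ & _ & K & HK & Hcov).
  destruct (hcompact_bounded K HK) as (N & HN1 & HNK).
  destruct (Hcov (pt (0, 0) (ln (2 * N * N)))) as (g & q & Gg & Kq & Egq).
  exists g. split; auto.
  pose proof (G_scale g Gg q) as E. rewrite Egq, ht_pt, exp_ln in E by nra. fold (lam g) in E.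
  destruct (HNK q Kq) as (_ & Hq & _). pose proof (ht_pos q). nra.
Qed.

(* If every element fixed the vertical line over [c], a point of height 1 far
   from [c] would be a translate of the compact fundamental set only through
   an element contracting by a large factor, forcing the preimage too low. *)
Let lattice_not_fix_all c : ~ (forall h, G h -> hmap h c = c).
Proof.
  intros Hfix.
  destruct G_nice as (_ & _ & _ & _ & _ & _ & K & HK & Hcov).
  destruct (hcompact_bounded K HK) as (N & HN1 & HNK).
  set (D := (N + Rabs (fst c)) ^ 2 + (N + Rabs (snd c)) ^ 2).
  assert (HD : 0 <= D)
    by (unfold D; pose proof (pow2_ge_0 (N + Rabs (fst c))); pose proof (pow2_ge_0 (N + Rabs (snd c))); lra).
  set (B := N ^ 2 * D + 1).
  destruct (Hcov (pt (fst c + B, snd c) 0)) as (h & q & Gh & Kq & Ehq).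
  pose proof (hmap_sqdist h (hor q) c Gh) as E1.
  rewrite Hfix, <- hor_hmap, Ehq, hor_pt in E1; auto.
  replace (sqdist (fst c + B, snd c) c) with (B ^ 2) in E1 by (unfold sqdist; simpl; ring).
  pose proof (G_scale h Gh q) as E2. rewrite Ehq, ht_pt, exp_0 in E2. fold (lam h) in E2.
  destruct (HNK q Kq) as (Q1 & Q2 & Q3 & Q4). pose proof (ht_pos q).
  pose proof (sqdist_hor_bound N q c Q3 Q4) as Hb. fold D in Hb.
  assert (E3 : B ^ 2 * ht q ^ 2 = sqdist (hor q) c).
  { rewrite E1.
    replace (lam h ^ 2 * sqdist (hor q) c * ht q ^ 2) with ((lam h * ht q) ^ 2 * sqdist (hor q) c)
      by ring.
    rewrite <- E2. ring. }
  assert (Hq2 : 1 < N ^ 2 * ht q ^ 2).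
  { replace (N ^ 2 * ht q ^ 2) with ((N * ht q) * (N * ht q)) by ring.
    assert (1 < N * ht q).
    { apply (Rmult_lt_compat_l N) in Q1; [|lra]. rewrite Rinv_r in Q1 by lra. lra. }
    nra. }
  assert (B ^ 2 < N ^ 2 * D).
  { apply Rlt_le_trans with (N ^ 2 * (B ^ 2 * ht q ^ 2)).
    { replace (N ^ 2 * (B ^ 2 * ht q ^ 2)) with (B ^ 2 * (N ^ 2 * ht q ^ 2)) by ring.
      rewrite <- (Rmult_1_r (B ^ 2)) at 1. apply Rmult_lt_compat_l; auto.
      apply pow_lt. unfold B. nra. }
    rewrite E3. apply Rmult_le_compat_l; nra. }
  unfold B in *. nra.
Qed.

(* Conjugating a height-preserving [e] by powers of the expanding [g] shrinks
   its horizontal displacement at the axis of [g] by [lam g ^ 2] each time. *)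
Let lattice_shrinking_conjugates g g' e c : G g -> G g' ->
  (forall x, g (g' x) = x) -> (forall x, g' (g x) = x) -> 1 < lam g -> hmap g c = c ->
  G e -> lam e = 1 -> hmap e c <> c -> False.
Proof.
  intros Gg Gg' Hgg' Hg'g Hlam Hc Ge He Hec.
  destruct G_nice as (_ & _ & Gcomp & _).
  set (y := pt c 0).
  set (en := fun n x => Nat.iter n g' (e (Nat.iter n g x))).
  assert (Gen : forall n, G (en n)).
  { intros n. apply (Gcomp _ _ (lattice_iter_closed G g' G_nice Gg' n)).
    exact (Gcomp e _ Ge (lattice_iter_closed G g G_nice Gg n)). }
  pose proof (lam_inv g' g Gg' Hg'g) as Hl.
  set (r := lam g' ^ 2).
  assert (Hr : 0 < r < 1) by (pose proof (lam_pos g'); unfold r; split; nra).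
  assert (Hc' : hmap g' c = c) by (rewrite <- Hc at 1; apply hmap_inv; auto).
  set (dl := sqdist (hmap e c) c).
  assert (Hdl : 0 < dl) by (apply sqdist_pos; auto).
  assert (Val : forall n, hcosh y (en n y) = 1 + r ^ n * (dl / 2)).
  { intros n. unfold en.
    assert (Hy : hor y = c) by apply hor_pt.
    assert (Hty : ht y = 1) by apply exp_0.
    assert (Hht : ht (Nat.iter n g' (e (Nat.iter n g y))) = 1).
    { rewrite (ht_iter g'), (G_scale e Ge), (ht_iter g), Hty; auto. fold (lam e).
      rewrite He. replace (lam g' ^ n * (1 * (lam g ^ n * 1))) with ((lam g' * lam g) ^ n)
        by (rewrite Rpow_mult_distr; ring).
      rewrite Hl. apply pow1. }
    assert (Hhor : sqdist c (hor (Nat.iter n g' (e (Nat.iter n g y)))) = r ^ n * dl).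
    { rewrite sqdist_sym, (hor_iter g'), (hor_hmap e), (hor_iter g), Hy, (iter_fixpoint (hmap g) c n Hc); auto.
      apply sqdist_iter_fix; auto using hmap_sqdist. }
    rewrite hcosh_hor, Hy, Hhor, Hht, Hty. field. }
  apply (nice_lattice_discrete G en y G_nice Gen).
  - apply Un_cv_ext with (fun n => 1 + r ^ n * (dl / 2)); [intros; rewrite Val; auto|].
    apply Un_cv_pow_lt_1; auto.
  - intros n m E. rewrite !Val in E. apply (pow_lt_1_inj r); auto.
    apply (Rmult_eq_reg_r (dl / 2)); lra.
Qed.

Lemma lattice_fixing_inf_absurd : False.
Proof.
  destruct lattice_expanding as (g & Gg & Hlam).
  pose proof G_nice as (_ & _ & Gcomp & Ginv & _).
  destruct (Ginv g Gg) as (g' & Gg' & Hgg' & Hg'g).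
  assert (Hsim : forall w w', sqdist (hmap g w) (hmap g w') = lam g ^ 2 * sqdist w w')
    by auto using hmap_sqdist.
  assert (Hmu : lam g ^ 2 <> 1) by nra.
  destruct (similarity_fixpoint (hmap g) (lam g ^ 2)) as [c Hc]; auto; [nra|].
  destruct (classic (forall h, G h -> hmap h c = c)) as [Hall|Hnot];
    [exact (lattice_not_fix_all c Hall)|].
  apply not_all_ex_not in Hnot. destruct Hnot as [h Hh].
  apply imply_to_and in Hh. destruct Hh as [Gh Hhc].
  destruct (Ginv h Gh) as (h' & Gh' & Hhh' & Hh'h).
  set (e := fun x => h' (g' (h (g x)))).
  apply (lattice_shrinking_conjugates g g' e c); auto.
  - exact (Gcomp h' _ Gh' (Gcomp g' _ Gg' (Gcomp h g Gh Gg))).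
  - unfold lam, e. rewrite (G_scale h' Gh'), (G_scale g' Gg'), (G_scale h Gh).
    fold (lam h') (lam g') (lam h) (lam g).
    transitivity ((lam h' * lam h) * (lam g' * lam g)); [ring|].
    rewrite (lam_inv h' h Gh' Hh'h), (lam_inv g' g Gg' Hg'g). ring.
  - (* the horizontal map of [e] fixes [c] only if [g] fixes [h c] *)
    intros E. apply Hhc. unfold e in E.
    rewrite (hmap_comp h' (fun x => g' (h (g x)))), (hmap_comp g' (fun x => h (g x))),
      (hmap_comp h g), Hc in E; auto.
    set (c' := hmap h c) in *.
    assert (E' : hmap g' c' = c') by (rewrite <- (hmap_inv h h' (hmap g' c')), E; auto).
    symmetry. apply (similarity_fixpoint_unique (hmap g) (lam g ^ 2)); auto.
    rewrite <- E' at 1. apply hmap_inv; auto.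
Qed.

End LatticeFixingInf.

Lemma nice_lattice_moves_inf G : nice_lattice G ->
  (forall g, G g -> exists f, boundary_map g f) ->
  exists g f, G g /\ boundary_map g f /\ f None <> None.
Proof.
  intros NL BM. apply NNPP. intros Hn.
  apply (lattice_fixing_inf_absurd G NL). intros g Gg x.
  destruct (BM g Gg) as [f Hf].
  assert (E : f None = None) by (apply NNPP; intros Hne; apply Hn; eauto).
  pose proof (boundary_fix_inf_height_ratio g f (proj1 NL g Gg) Hf E x p0) as Hr.
  rewrite ht_p0 in Hr. lra.
Qed.

Lemma lattice_boundary_map_pole G g f : nice_lattice G ->
  (forall g, G g -> exists f, boundary_map g f) -> G g -> boundary_map g f -> f None <> None ->
  (exists q, f (Some q) = None) /\ (forall z u, f z = f u -> z = u).
Proof.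
  intros (_ & _ & _ & Ginv & _) BM Gg Hf HfN.
  destruct (Ginv g Gg) as (g' & Gg' & Hgg' & Hg'g).
  destruct (BM g' Gg') as [f' Hf'].
  pose proof (boundary_map_inv g g' f f' Hf Hf' Hgg') as Hff'.
  pose proof (boundary_map_inv g' g f' f Hf' Hf Hg'g) as Hf'f.
  split.
  - destruct (f' None) as [q|] eqn:Eq.
    + exists q. rewrite <- Eq. apply Hff'.
    + exfalso. apply HfN. rewrite <- Eq at 1. apply Hff'.
  - intros z u E. rewrite <- (Hf'f z), <- (Hf'f u), E. auto.
Qed.

Theorem lemma1p5 (h : S -> S) :
  homeomorphism_S h ->
  h None = None ->
  (exists G1 G2 : (H3 -> H3) -> Prop,
      nice_lattice G1 /\ nice_lattice G2 /\ conj_lattices h G1 G2) ->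
  real_affine_on_C h ->
  conformal h.
Proof.
  intros Hhom HhN (G1 & G2 & NL1 & NL2 & Cj1 & _) (a & b & c & d & e & f & Hdet & Hh).
  assert (Hh' : forall p, h (Some p) = Some (affine_map a b c d e f p))
    by (intros [x y]; apply Hh).
  assert (BM1 : forall g, G1 g -> exists f, boundary_map g f)
    by (intros g Gg; destruct (Cj1 g Gg) as (_ & f1 & _ & _ & Hf1 & _); eauto).
  destruct (nice_lattice_moves_inf G1 NL1 BM1) as (g1 & f0 & Gg1 & Hf0 & Hf0N).
  destruct (Cj1 g1 Gg1) as (g2 & f1 & f2 & Gg2 & Hf1 & Hf2 & Hconj).
  rewrite <- (boundary_map_unique g1 f1 f0 Hf1 Hf0) in Hf0N.
  destruct (lattice_boundary_map_pole G1 g1 f1 NL1 BM1 Gg1 Hf1 Hf0N) as ((q & Hq) & Hinj).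
  assert (Hsurj : forall w, exists z, h z = w)
    by (destruct Hhom as (hinv & _ & Hhhinv & _); intros w; exists (hinv w); auto).
  pose proof (affine_conj_pole_lin_conf h a b c d e f g1 g2 f1 f2 q Hdet Hh' HhN Hsurj
                (proj1 NL1 g1 Gg1) (proj1 NL2 g2 Gg2) Hf1 Hf2 Hconj Hq Hinj) as Hconf.
  split; [exact Hhom|].
  intros A HA. apply (affine_similarity_image_circle a b c d e f); auto.
Qed.
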